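(* Let $X=X(s)$ be a strictly convex $C^{(3)}$ curve in the plane $\mathbb{R}^2$, parametrized by arclength. The following are equivalent: (1) there are functions $\lambda(s)$ and $\mu(s)$ such that for all $s$ and all sufficiently small $h_1,h_2$ (with $X(s),X(s+h_1),X(s+h_2)$ distinct), $U(s,h_1,h_2)=\lambda(s)\,T(s,h_1,h_2)^{\mu(s)}$; (2) for all $s$ and all sufficiently small $h_1,h_2$ (with the three points distinct), $U(s,h_1,h_2)=\frac12 T(s,h_1,h_2)$; (3) $X$ is an open part of a parabola.
   Context: A regular plane curve $X$ defined on an open interval is convex if for every point of $X$ the trace of $X$ lies entirely in one closed half-plane determined by the tangent line at that point. A simple convex curve $X$ is strictly convex if it is of class $C^{(3)}$ and has positive curvature with respect to the unit normal pointing to the convex side. For three distinct points $A=X(s)$, $A_i=X(s+h_i)$ ($i=1,2$) on $X$, let $\ell,\ell_1,\ell_2$ be the tangent lines of $X$ at $A,A_1,A_2$, and let $B=\ell_1\cap\ell_2$, $B_1=\ell\cap\ell_1$, $B_2=\ell\cap\ell_2$. Define $T(s,h_1,h_2)=|\triangle AA_1A_2|$ and $U(s,h_1,h_2)=|\triangle BB_1B_2|$ (areas). *)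

From Stdlib Require Import Reals.
From Coquelicot Require Import Coquelicot.
Open Scope R_scope.

Definition pt := (R * R)%type.
Definition psub (p q : pt) : pt := (fst p - fst q, snd p - snd q).
Definition cross (p q : pt) : R := fst p * snd q - snd p * fst q.
Definition tri_area (A B C : pt) : R := Rabs (cross (psub B A) (psub C A)) / 2.
(** Intersection point of the lines P + t d and Q + u e (meaningful when
    cross d e <> 0). *)
Definition line_inter (P d Q e : pt) : pt :=
  let t := cross (psub Q P) e / cross d e in
  (fst P + t * fst d, snd P + t * snd d).

Definition in_I (a b : Rbar) (t : R) : Prop := Rbar_lt a t /\ Rbar_lt t b.

Definition Xp (x y : R -> R) (s : R) : pt := (x s, y s).
Definition Tan (x y : R -> R) (s : R) : pt := (Derive x s, Derive y s).
Definition kappa (x y : R -> R) (s : R) : R :=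
  Derive x s * Derive_n y 2 s - Derive y s * Derive_n x 2 s.

Definition C3_on (a b : Rbar) (f : R -> R) : Prop :=
  forall t, in_I a b t ->
    (forall k, (k <= 3)%nat -> ex_derive_n f k t) /\ continuous (Derive_n f 3) t.

Definition arclength_param (a b : Rbar) (x y : R -> R) : Prop :=
  forall t, in_I a b t -> (Derive x t) ^ 2 + (Derive y t) ^ 2 = 1.

Definition simple_curve (a b : Rbar) (x y : R -> R) : Prop :=
  forall s t, in_I a b s -> in_I a b t -> Xp x y s = Xp x y t -> s = t.

(** Convex: at every point the trace lies in one closed half-plane bounded by
    the tangent line at that point. *)
Definition convex_curve (a b : Rbar) (x y : R -> R) : Prop :=
  forall s, in_I a b s ->
    (forall t, in_I a b t -> 0 <= cross (Tan x y s) (psub (Xp x y t) (Xp x y s))) \/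
    (forall t, in_I a b t -> cross (Tan x y s) (psub (Xp x y t) (Xp x y s)) <= 0).

(** Strictly convex: simple, convex, C^3, and positive curvature with respect
    to the unit normal eps*(-y',x') (eps = +-1) pointing to the convex side,
    i.e. X''.(eps*N) = eps*kappa > 0. *)
Definition strictly_convex (a b : Rbar) (x y : R -> R) : Prop :=
  C3_on a b x /\ C3_on a b y /\ simple_curve a b x y /\ convex_curve a b x y /\
  forall s, in_I a b s -> exists eps : R, (eps = 1 \/ eps = -1) /\
    (forall t, in_I a b t ->
        0 <= eps * cross (Tan x y s) (psub (Xp x y t) (Xp x y s))) /\
    0 < eps * kappa x y s.

Definition Tarea (x y : R -> R) (s h1 h2 : R) : R :=
  tri_area (Xp x y s) (Xp x y (s + h1)) (Xp x y (s + h2)).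

Definition Uarea (x y : R -> R) (s h1 h2 : R) : R :=
  let B  := line_inter (Xp x y (s + h1)) (Tan x y (s + h1))
                       (Xp x y (s + h2)) (Tan x y (s + h2)) in
  let B1 := line_inter (Xp x y s) (Tan x y s) (Xp x y (s + h1)) (Tan x y (s + h1)) in
  let B2 := line_inter (Xp x y s) (Tan x y s) (Xp x y (s + h2)) (Tan x y (s + h2)) in
  tri_area B B1 B2.

Definition for_small_h (a b : Rbar) (x y : R -> R) (s : R) (P : R -> R -> Prop) : Prop :=
  exists delta : R, 0 < delta /\
    forall h1 h2, Rabs h1 < delta -> Rabs h2 < delta ->
      in_I a b (s + h1) -> in_I a b (s + h2) ->
      Xp x y s <> Xp x y (s + h1) -> Xp x y s <> Xp x y (s + h2) ->
      Xp x y (s + h1) <> Xp x y (s + h2) ->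
      P h1 h2.

(** Parabola: { c + t e1 + t^2 e2 | t in R } with e1, e2 linearly independent
    (this is exactly the class of affine images of y = x^2, i.e. all parabolas). *)
Definition on_parabola (c e1 e2 : pt) (p : pt) : Prop :=
  exists t : R, p = (fst c + t * fst e1 + t ^ 2 * fst e2,
                     snd c + t * snd e1 + t ^ 2 * snd e2).

Definition open_part_of_parabola (a b : Rbar) (x y : R -> R) : Prop :=
  exists c e1 e2 : pt, cross e1 e2 <> 0 /\
    forall s, in_I a b s -> on_parabola c e1 e2 (Xp x y s).

From Stdlib Require Import Reals Lra Lia Psatz Classical.
From Coquelicot Require Import Coquelicot.
Open Scope R_scope.

(** In the orthonormal frame (X'(s), N(s)) write X(s+h) - X(s) = u(h) X'(s) + v(h) N(s).
    Letting h2 -> h1, the ratio U/T tends to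
    rho(h1) = v^2 |kappa(s+h1)| / (v'^2 |W|), where W = u v' - v u', while T / |h2 - h1|
    tends to |W|/2 > 0; comparing h2 - h1 = d with d/2 in U = lambda T^mu forces mu = 1 and
    lambda = rho(h1), and h1 -> 0 gives lambda = 1/2.  Thus (1) and (2) both amount to
    rho = 1/2 near 0, i.e. to the differential equation 2 v^2 kappa(s+h) = v'^2 W.  Along it
    K1 = v'^2 v / (4 W^2) and K2 = v'(u v' - 2 v u') / (4 W^2) have zero derivative, hence
    equal their limits at h = 0, and the identity K1 v = (K1 u + K2 v)^2 exhibits a parabola
    through all nearby points of the curve.  Two parabolas sharing five points coincide (a
    quartic with five roots vanishes), so these local parabolas glue along the interval.
    Conversely, on the parabola c + t e1 + t^2 e2 the tangents at t_i and t_j meet at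
    c + (t_i + t_j)/2 e1 + t_i t_j e2, and U = T/2 is a polynomial identity. *)

Lemma in_I_nbhd (a b : Rbar) t : in_I a b t ->
  exists r, 0 < r /\ forall t', Rabs (t' - t) < r -> in_I a b t'.
Proof.
  intros [Ha Hb].
  destruct a as [a| |]; destruct b as [b| |]; simpl in *; try contradiction.
  - exists (Rmin (t - a) (b - t)). split; [apply Rmin_pos; lra|].
    intros t' H. pose proof (Rmin_l (t - a) (b - t)). pose proof (Rmin_r (t - a) (b - t)).
    apply Rabs_def2 in H. split; simpl; lra.
  - exists (t - a). split; [lra|]. intros t' H. apply Rabs_def2 in H. split; simpl; lra.
  - exists (b - t). split; [lra|]. intros t' H. apply Rabs_def2 in H. split; simpl; lra.
  - exists 1. split; [lra|]. intros t' _. split; simpl; auto.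
Qed.

Lemma in_I_between (a b : Rbar) u w t : in_I a b u -> in_I a b w -> u <= t <= w -> in_I a b t.
Proof.
  intros [Hu1 Hu2] [Hw1 Hw2] Ht. split.
  - destruct a; simpl in *; auto; lra.
  - destruct b; simpl in *; auto; lra.
Qed.

Lemma in_I_inhabited (a b : Rbar) : Rbar_lt a b -> exists s, in_I a b s.
Proof.
  intros H. destruct a as [a| |]; destruct b as [b| |]; simpl in H; try contradiction.
  - exists ((a + b) / 2). split; simpl; lra.
  - exists (a + 1). split; simpl; auto; lra.
  - exists (b - 1). split; simpl; auto; lra.
  - exists 0. split; simpl; auto.
Qed.

Lemma Rabs_half a : Rabs (a / 2) = Rabs a / 2.
Proof. unfold Rdiv. rewrite Rabs_mult, Rabs_inv, (Rabs_right 2); lra. Qed.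

Lemma pow2_pos_of_neq0 h : h <> 0 -> 0 < h ^ 2.
Proof. intros H. pose proof (Rsqr_pos_lt h H). unfold Rsqr in *. nra. Qed.

(** * Limits at 0 and Taylor expansion *)

Definition lim0 (f : R -> R) (l : R) := is_lim f 0 l.

Lemma lim0_const c : lim0 (fun _ => c) c.
Proof. apply is_lim_const. Qed.
Lemma lim0_id : lim0 (fun h => h) 0.
Proof. apply (is_lim_id 0). Qed.
Lemma lim0_plus f g a b : lim0 f a -> lim0 g b -> lim0 (fun h => f h + g h) (a + b).
Proof. intros. apply (is_lim_plus' f g 0 a b); auto. Qed.
Lemma lim0_minus f g a b : lim0 f a -> lim0 g b -> lim0 (fun h => f h - g h) (a - b).
Proof. intros. apply (is_lim_minus' f g 0 a b); auto. Qed.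
Lemma lim0_mult f g a b : lim0 f a -> lim0 g b -> lim0 (fun h => f h * g h) (a * b).
Proof. intros. apply (is_lim_mult f g 0 a b); auto; exact I. Qed.
Lemma lim0_inv f a : lim0 f a -> a <> 0 -> lim0 (fun h => / f h) (/ a).
Proof. intros. apply (is_lim_inv f 0 a); auto. intro E; injection E; auto. Qed.
Lemma lim0_div f g a b : lim0 f a -> lim0 g b -> b <> 0 -> lim0 (fun h => f h / g h) (a / b).
Proof. intros. unfold Rdiv. apply lim0_mult; auto. apply lim0_inv; auto. Qed.
Lemma lim0_abs f a : lim0 f a -> lim0 (fun h => Rabs (f h)) (Rabs a).
Proof. intros H. apply (is_lim_comp_continuous f Rabs 0 a H). apply continuous_Rabs. Qed.
Lemma lim0_pow f a n : lim0 f a -> lim0 (fun h => f h ^ n) (a ^ n).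
Proof. intros H. induction n; simpl; [apply lim0_const | apply lim0_mult; auto]. Qed.

Lemma lim0_Rpower f m l : lim0 f l -> 0 < l -> lim0 (fun d => Rpower (f d) m) (Rpower l m).
Proof.
  intros H Hl. unfold Rpower.
  apply (is_lim_comp_continuous f (fun z => exp (m * ln z)) 0 l H).
  apply continuous_exp_comp. apply (continuous_scal_r m ln). apply continuous_ln; auto.
Qed.

Lemma lim0_eq f a b : lim0 f a -> a = b -> lim0 f b.
Proof. intros H ->; auto. Qed.

Lemma lim0_ext_loc f g l d : 0 < d -> (forall h, h <> 0 -> Rabs h < d -> f h = g h) ->
  lim0 f l -> lim0 g l.
Proof.
  intros Hd E H. apply (is_lim_ext_loc f g 0 l); auto. exists (mkposreal d Hd).
  intros y Hb Hy. change (Rabs (y - 0) < d) in Hb. rewrite Rminus_0_r in Hb. auto.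
Qed.

Lemma lim0_ext f g l : (forall h, h <> 0 -> f h = g h) -> lim0 f l -> lim0 g l.
Proof. intros E. apply (lim0_ext_loc f g l 1 Rlt_0_1). auto. Qed.

Lemma lim0_spec f l : lim0 f l <-> forall eps, 0 < eps ->
  exists d, 0 < d /\ forall h, h <> 0 -> Rabs h < d -> Rabs (f h - l) < eps.
Proof.
  unfold lim0. split.
  - intros H eps Heps. apply is_lim_spec in H. destruct (H (mkposreal eps Heps)) as [d Hd].
    exists d. split; [apply cond_pos|]. intros h Hh Hb. apply Hd; auto.
    change (Rabs (h - 0) < d). rewrite Rminus_0_r. exact Hb.
  - intros H. apply is_lim_spec. intros eps. destruct (H eps (cond_pos eps)) as [d [Hd Hdd]].
    exists (mkposreal d Hd). intros h Hb Hh. apply Hdd; auto.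
    change (Rabs (h - 0) < d) in Hb. rewrite Rminus_0_r in Hb. exact Hb.
Qed.

Lemma lim0_unique f a b : lim0 f a -> lim0 f b -> a = b.
Proof.
  intros Ha Hb. apply is_lim_unique in Ha. apply is_lim_unique in Hb. rewrite Ha in Hb.
  injection Hb; auto.
Qed.

Lemma lim0_sign f l : lim0 f l -> l <> 0 ->
  exists d, 0 < d /\ forall h, h <> 0 -> Rabs h < d -> 0 < f h * l.
Proof.
  intros H Hl. destruct (proj1 (lim0_spec f l) H (Rabs l)) as [d [Hd Hdd]].
  { apply Rabs_pos_lt; auto. }
  exists d. split; auto. intros h H1 H2. specialize (Hdd h H1 H2).
  apply Rabs_def2 in Hdd. destruct (Rle_lt_dec 0 l).
  - rewrite Rabs_right in Hdd by lra. nra.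
  - rewrite Rabs_left in Hdd by lra. nra.
Qed.

Lemma lim0_pos f l : lim0 f l -> 0 < l ->
  exists d, 0 < d /\ forall h, h <> 0 -> Rabs h < d -> 0 < f h.
Proof.
  intros H Hl. destruct (lim0_sign f l H) as [d [Hd Hdd]]; [lra|].
  exists d. split; auto. intros h H1 H2. specialize (Hdd h H1 H2). nra.
Qed.

Lemma lim0_const_right f c l e : 0 < e -> (forall h, 0 < h < e -> f h = c) -> lim0 f l -> c = l.
Proof.
  intros He Hc H. destruct (Req_dec c l) as [|Hne]; auto. exfalso.
  destruct (proj1 (lim0_spec f l) H (Rabs (c - l))) as [d [Hd Hdd]]; [apply Rabs_pos_lt; lra|].
  set (h := Rmin d e / 2). assert (0 < Rmin d e) by (apply Rmin_pos; lra).
  pose proof (Rmin_l d e). pose proof (Rmin_r d e).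
  specialize (Hdd h). rewrite Hc in Hdd by (unfold h; lra).
  apply (Rlt_irrefl (Rabs (c - l))), Hdd; unfold h; [lra|rewrite Rabs_right; lra].
Qed.

Lemma lim0_const_left f c l e : 0 < e -> (forall h, - e < h < 0 -> f h = c) -> lim0 f l -> c = l.
Proof.
  intros He Hc H. destruct (Req_dec c l) as [|Hne]; auto. exfalso.
  destruct (proj1 (lim0_spec f l) H (Rabs (c - l))) as [d [Hd Hdd]]; [apply Rabs_pos_lt; lra|].
  set (h := - (Rmin d e / 2)). assert (0 < Rmin d e) by (apply Rmin_pos; lra).
  pose proof (Rmin_l d e). pose proof (Rmin_r d e).
  specialize (Hdd h). rewrite Hc in Hdd by (unfold h; lra).
  apply (Rlt_irrefl (Rabs (c - l))), Hdd; unfold h; [lra|rewrite Rabs_left; lra].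
Qed.

Lemma lim0_half f l : lim0 f l -> lim0 (fun h => f (h / 2)) l.
Proof.
  rewrite !lim0_spec. intros H eps Heps. destruct (H eps Heps) as [d [Hd Hdd]].
  exists d. split; auto. intros h Hh Hb. apply Hdd; [lra|]. rewrite Rabs_half. lra.
Qed.

Lemma lim0_shift (f : R -> R) s : ex_derive f s -> lim0 (fun h => f (s + h)) (f s).
Proof.
  intros H. apply (is_lim_comp_continuous (fun h => s + h) f 0 s).
  - pose proof (is_lim_plus' (fun _ => s) (fun h => h) 0 s 0 (is_lim_const s 0) (is_lim_id 0)) as L.
    rewrite Rplus_0_r in L. exact L.
  - exact (ex_derive_continuous f s H).
Qed.

Lemma lim0_difference_quotient (g : R -> R) l : is_derive g 0 l -> g 0 = 0 ->
  lim0 (fun d => g d / d) l.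
Proof.
  intros H H0. apply is_derive_Reals in H. apply lim0_spec. intros eps Heps.
  destruct (H eps Heps) as [d Hd]. exists d. split; [apply cond_pos|].
  intros h Hh Hb. specialize (Hd h Hh Hb). rewrite Rplus_0_l, H0, Rminus_0_r in Hd. auto.
Qed.

Definition littleo_pow (g : R -> R) (n : nat) : Prop :=
  forall eps, 0 < eps -> exists d, 0 < d /\
    forall h, Rabs h < d -> Rabs (g h) <= eps * Rabs h ^ n.

Lemma Rabs_le_between h z : Rmin 0 h <= z <= Rmax 0 h -> Rabs z <= Rabs h.
Proof.
  intros Hz. destruct (Rle_lt_dec 0 h).
  - rewrite Rmin_left, Rmax_right in Hz by lra. rewrite !Rabs_right; lra.
  - rewrite Rmin_right, Rmax_left in Hz by lra. rewrite !Rabs_left1; lra.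
Qed.

(** By the mean value theorem, integrating an o(h^n) derivative gives o(h^(n+1)). *)
Lemma littleo_pow_S (g dg : R -> R) n r : 0 < r -> g 0 = 0 ->
  (forall h, Rabs h < r -> is_derive g h (dg h)) -> littleo_pow dg n -> littleo_pow g (S n).
Proof.
  intros Hr Hg0 Hd Ho eps Heps.
  destruct (Ho eps Heps) as [d [Hd0 Hdd]].
  exists (Rmin d r). split; [apply Rmin_pos; lra|].
  intros h Hh. pose proof (Rmin_l d r). pose proof (Rmin_r d r).
  destruct (MVT_gen g 0 h dg) as [c [Hc Hgc]].
  - intros z Hz. apply Hd. pose proof (Rabs_le_between h z ltac:(lra)). lra.
  - intros z Hz. apply continuity_pt_filterlim, (ex_derive_continuous g).
    exists (dg z). apply Hd. pose proof (Rabs_le_between h z Hz). lra.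
  - pose proof (Rabs_le_between h c Hc) as Hch.
    rewrite Hg0, !Rminus_0_r in Hgc. rewrite Hgc, Rabs_mult.
    assert (H1 : Rabs (dg c) <= eps * Rabs c ^ n) by (apply Hdd; lra).
    assert (0 <= Rabs c ^ n) by (apply pow_le, Rabs_pos).
    assert (Rabs c ^ n <= Rabs h ^ n) by (apply pow_incr; split; [apply Rabs_pos|lra]).
    pose proof (Rabs_pos h). simpl.
    apply Rle_trans with (eps * Rabs c ^ n * Rabs h); [apply Rmult_le_compat_r; auto|].
    replace (eps * (Rabs h * Rabs h ^ n)) with (eps * Rabs h ^ n * Rabs h) by ring.
    apply Rmult_le_compat_r; auto. apply Rmult_le_compat_l; lra.
Qed.

Lemma littleo_pow_1 (f : R -> R) s l :
  is_derive f s l -> littleo_pow (fun h => f (s + h) - f s - h * l) 1.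
Proof.
  intros H eps Heps. apply is_derive_Reals in H.
  destruct (H eps Heps) as [d Hd].
  exists d. split; [apply cond_pos|]. intros h Hh.
  destruct (Req_dec h 0) as [->|Hh0].
  - rewrite Rplus_0_r, Rabs_R0. replace (f s - f s - 0 * l) with 0 by ring.
    rewrite Rabs_R0. simpl. lra.
  - specialize (Hd h Hh0 Hh).
    replace (f (s + h) - f s - h * l) with (((f (s + h) - f s) / h - l) * h) by (field; auto).
    rewrite Rabs_mult. simpl. rewrite Rmult_1_r. apply Rmult_le_compat_r; [apply Rabs_pos|lra].
Qed.

Lemma lim0_littleo_pow g n : littleo_pow g n -> lim0 (fun h => g h / h ^ n) 0.
Proof.
  intros H. apply lim0_spec. intros eps Heps.
  destruct (H (eps / 2)) as [d [Hd Hdd]]; [lra|].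
  exists d. split; auto. intros h Hne Hb.
  specialize (Hdd h Hb). rewrite Rminus_0_r.
  assert (Hp : 0 < Rabs h ^ n) by (apply pow_lt, Rabs_pos_lt; auto).
  unfold Rdiv. rewrite Rabs_mult, Rabs_inv, <- RPow_abs.
  apply Rle_lt_trans with (eps / 2); [|lra].
  apply (Rmult_le_reg_r (Rabs h ^ n)); auto. rewrite Rmult_assoc, Rinv_l; lra.
Qed.

Lemma lim0_littleo_comb g1 g2 n c1 c2 c : littleo_pow g1 n -> littleo_pow g2 n ->
  lim0 (fun h => c1 * (g1 h / h ^ n) + c2 * (g2 h / h ^ n) + c) c.
Proof.
  intros H1 H2. eapply lim0_eq.
  - apply lim0_plus; [apply lim0_plus|apply lim0_const];
      apply lim0_mult; try apply lim0_const; apply lim0_littleo_pow; auto.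
  - ring.
Qed.

(** [auto_derive] leaves eta-expanded functions such as [Derive (fun t => f t)]. *)
Ltac fold_eta := repeat match goal with
  | |- context [fun t => ?f t] => change (fun t => f t) with f end.

Definition D2 (f : R -> R) := Derive (Derive f).
Definition D3 (f : R -> R) := Derive (Derive (Derive f)).

Lemma taylor3 (f : R -> R) (s r0 : R) : 0 < r0 ->
  (forall t, Rabs (t - s) < r0 ->
     ex_derive f t /\ ex_derive (Derive f) t /\ ex_derive (D2 f) t) ->
  littleo_pow (fun h => f (s + h) - f s - h * Derive f s - h ^ 2 / 2 * D2 f s
                        - h ^ 3 / 6 * D3 f s) 3 /\
  littleo_pow (fun h => Derive f (s + h) - Derive f s - h * D2 f s - h ^ 2 / 2 * D3 f s) 2.
Proof.
  intros Hr H.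
  assert (Hs : forall h, Rabs h < r0 ->
    ex_derive f (s + h) /\ ex_derive (Derive f) (s + h) /\ ex_derive (D2 f) (s + h)).
  { intros h Hh. apply H. replace (s + h - s) with h by ring. auto. }
  assert (O1 : littleo_pow (fun h => D2 f (s + h) - D2 f s - h * D3 f s) 1).
  { apply littleo_pow_1, Derive_correct. destruct (Hs 0) as [_ [_ Hx]].
    - rewrite Rabs_R0; auto.
    - rewrite Rplus_0_r in Hx; exact Hx. }
  assert (O2 : littleo_pow (fun h => Derive f (s + h) - Derive f s - h * D2 f s
                                     - h ^ 2 / 2 * D3 f s) 2).
  { apply (littleo_pow_S _ (fun h => D2 f (s + h) - D2 f s - h * D3 f s) 1 r0 Hr); auto.
    - rewrite Rplus_0_r; field.
    - intros h Hh. destruct (Hs h Hh) as [_ [H2 _]].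
      auto_derive; [repeat split; auto|]. fold_eta. unfold D2. field. }
  split; auto.
  apply (littleo_pow_S _ (fun h => Derive f (s + h) - Derive f s - h * D2 f s
                             - h ^ 2 / 2 * D3 f s) 2 r0 Hr); auto.
  - rewrite Rplus_0_r; field.
  - intros h Hh. destruct (Hs h Hh) as [H1 _].
    auto_derive; [repeat split; auto|]. fold_eta. unfold D2. field.
Qed.

Lemma constant_of_derive0 (f : R -> R) a b : (forall z, a < z < b -> is_derive f z 0) ->
  forall z1 z2, a < z1 < b -> a < z2 < b -> f z1 = f z2.
Proof.
  intros Hd z1 z2 H1 H2.
  assert (Hin : forall z, Rmin z1 z2 <= z <= Rmax z1 z2 -> a < z < b).
  { intros z Hz. split.
    - apply Rlt_le_trans with (Rmin z1 z2); [apply Rmin_glb_lt|]; lra.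
    - apply Rle_lt_trans with (Rmax z1 z2); [|apply Rmax_lub_lt]; lra. }
  destruct (MVT_gen f z1 z2 (fun _ => 0)) as [c [Hc E]].
  - intros z Hz. apply Hd, Hin. lra.
  - intros z Hz. apply continuity_pt_filterlim, (ex_derive_continuous f).
    exists 0. apply Hd, Hin, Hz.
  - lra.
Qed.

(** Connectedness of the segment [[al, be]]. *)
Lemma segment_transport (P : R -> Prop) al be : al <= be ->
  (forall t, al <= t <= be -> exists e, 0 < e /\
     forall t', al <= t' <= be -> Rabs (t' - t) < e -> (P t <-> P t')) ->
  P al -> P be.
Proof.
  intros Hab Hl Pa.
  set (E := fun t => al <= t <= be /\ forall u, al <= u <= t -> P u).
  assert (Eal : E al) by (split; [lra|intros u Hu; replace u with al by lra; auto]).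
  assert (Eb : bound E) by (exists be; intros t [Ht _]; lra).
  destruct (completeness E Eb (ex_intro _ al Eal)) as [sg [Hub Hlub]].
  assert (Hs1 : al <= sg) by (apply Hub; auto).
  assert (Hs2 : sg <= be) by (apply Hlub; intros t [Ht _]; lra).
  destruct (Hl sg ltac:(lra)) as [e [He Hloc]].
  assert (Ht : exists t, E t /\ sg - e < t).
  { apply NNPP. intro N. assert (sg <= sg - e); [|lra].
    apply Hlub. intros t Et. apply Rnot_lt_le. intro Lt. apply N. exists t; auto. }
  destruct Ht as [t [[Ht1 Ht2] Ht3]].
  assert (tle : t <= sg) by (apply Hub; split; auto).
  assert (Psg : P sg) by (apply (Hloc t); [lra|rewrite Rabs_left1; lra|apply Ht2; lra]).
  assert (Pnear : forall u, al <= u <= be -> Rabs (u - sg) < e -> P u)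
    by (intros u Hu Hb; apply (Hloc u); auto).
  destruct (Rlt_dec sg be) as [Hlt|Hge].
  - exfalso. pose proof (Rmin_l (sg + e / 2) be). pose proof (Rmin_r (sg + e / 2) be).
    assert (Em : E (Rmin (sg + e / 2) be)).
    { split; [split; [apply Rmin_glb|]; lra|]. intros u Hu.
      destruct (Rle_lt_dec u t); [apply Ht2; lra|].
      apply Pnear; [lra|apply Rabs_def1; lra]. }
    pose proof (Hub _ Em). unfold Rmin in *. destruct (Rle_dec (sg + e / 2) be); lra.
  - apply Pnear; [lra|]. replace (be - sg) with 0 by lra. rewrite Rabs_R0; auto.
Qed.

Lemma segment_transport_iff (P : R -> Prop) al be : al <= be ->
  (forall t, al <= t <= be -> exists e, 0 < e /\
     forall t', al <= t' <= be -> Rabs (t' - t) < e -> (P t <-> P t')) ->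
  (P al <-> P be).
Proof.
  intros Hab Hl. split; [apply segment_transport; auto|].
  intros Pb. apply NNPP. intro Na.
  apply (segment_transport (fun t => ~ P t) al be) in Na; auto.
  intros t Ht. destruct (Hl t Ht) as [e [He H]]. exists e. split; auto.
  intros t' Ht' Hb. specialize (H t' Ht' Hb). tauto.
Qed.

(** * Tangent triangles and parabolas *)

(** Numerator of the area of the triangle cut out by the lines [P_i + t d_i]. *)
Definition tangent_triangle_det (P0 d0 P1 d1 P2 d2 : pt) :=
  cross d0 P0 * cross d1 d2 + cross d1 P1 * cross d2 d0 + cross d2 P2 * cross d0 d1.

Lemma tri_area_line_inters P0 d0 P1 d1 P2 d2 :
  cross d0 d1 <> 0 -> cross d1 d2 <> 0 -> cross d2 d0 <> 0 ->
  tri_area (line_inter P1 d1 P2 d2) (line_inter P0 d0 P1 d1) (line_inter P0 d0 P2 d2) =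
  tangent_triangle_det P0 d0 P1 d1 P2 d2 ^ 2
    / (2 * Rabs (cross d0 d1 * cross d1 d2 * cross d2 d0)).
Proof.
  intros H1 H2 H3. unfold tri_area.
  assert (E : cross (psub (line_inter P0 d0 P1 d1) (line_inter P1 d1 P2 d2))
                    (psub (line_inter P0 d0 P2 d2) (line_inter P1 d1 P2 d2)) =
              - (tangent_triangle_det P0 d0 P1 d1 P2 d2 ^ 2
                  / (cross d0 d1 * cross d1 d2 * cross d2 d0))).
  { destruct P0 as [a0 b0], P1 as [a1 b1], P2 as [a2 b2],
      d0 as [p0 q0], d1 as [p1 q1], d2 as [p2 q2].
    unfold cross, psub, line_inter, tangent_triangle_det in *; simpl in *.
    unfold cross, psub; simpl. field. repeat split; auto. intro E; apply H3; lra. }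
  rewrite E, Rabs_Ropp. unfold Rdiv. rewrite Rabs_mult, Rabs_inv.
  rewrite (Rabs_right (tangent_triangle_det P0 d0 P1 d1 P2 d2 ^ 2)) by apply Rle_ge, pow2_ge_0.
  field. apply Rabs_no_R0. repeat apply Rmult_integral_contrapositive; auto.
Qed.

Lemma tangent_triangle_det_twice P0 d0 P1 d1 : tangent_triangle_det P0 d0 P1 d1 P1 d1 = 0.
Proof. unfold tangent_triangle_det, cross. ring. Qed.

Definition parabola_pt (c e1 e2 : pt) (t : R) : pt :=
  (fst c + t * fst e1 + t ^ 2 * fst e2, snd c + t * snd e1 + t ^ 2 * snd e2).

(** A nonzero multiple [k] of the velocity of [parabola_pt c e1 e2] at [t]. *)
Definition parabola_tangent (e1 e2 : pt) (k t : R) : pt :=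
  (k * (fst e1 + 2 * t * fst e2), k * (snd e1 + 2 * t * snd e2)).

Lemma line_inter_parabola_tangents c e1 e2 ti tj ki kj :
  cross e1 e2 <> 0 -> ti <> tj -> ki <> 0 -> kj <> 0 ->
  line_inter (parabola_pt c e1 e2 ti) (parabola_tangent e1 e2 ki ti)
             (parabola_pt c e1 e2 tj) (parabola_tangent e1 e2 kj tj) =
  (fst c + (ti + tj) / 2 * fst e1 + ti * tj * fst e2,
   snd c + (ti + tj) / 2 * snd e1 + ti * tj * snd e2).
Proof.
  intros HD Ht Hi Hj. destruct c as [c1 c2], e1 as [p1 q1], e2 as [p2 q2].
  unfold line_inter, parabola_pt, parabola_tangent, cross, psub in *; simpl in *.
  assert (tj - ti <> 0) by (intro; apply Ht; lra).
  replace (ki * (p1 + 2 * ti * p2) * (kj * (q1 + 2 * tj * q2))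
           - ki * (q1 + 2 * ti * q2) * (kj * (p1 + 2 * tj * p2)))
    with (2 * ki * kj * (tj - ti) * (p1 * q2 - q1 * p2)) by ring.
  f_equal; field; repeat split; auto; lra.
Qed.

Lemma tri_area_parabola c e1 e2 t0 t1 t2 :
  tri_area (parabola_pt c e1 e2 t0) (parabola_pt c e1 e2 t1) (parabola_pt c e1 e2 t2) =
  Rabs (cross e1 e2 * (t1 - t0) * (t2 - t0) * (t2 - t1)) / 2.
Proof.
  unfold tri_area. do 2 f_equal. destruct c, e1, e2.
  unfold parabola_pt, cross, psub; simpl. ring.
Qed.

Lemma tri_area_parabola_tangents c e1 e2 t0 t1 t2 k0 k1 k2 :
  cross e1 e2 <> 0 -> t0 <> t1 -> t0 <> t2 -> t1 <> t2 -> k0 <> 0 -> k1 <> 0 -> k2 <> 0 ->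
  let P i := parabola_pt c e1 e2 i in
  tri_area (line_inter (P t1) (parabola_tangent e1 e2 k1 t1) (P t2) (parabola_tangent e1 e2 k2 t2))
           (line_inter (P t0) (parabola_tangent e1 e2 k0 t0) (P t1) (parabola_tangent e1 e2 k1 t1))
           (line_inter (P t0) (parabola_tangent e1 e2 k0 t0) (P t2) (parabola_tangent e1 e2 k2 t2))
  = / 2 * tri_area (P t0) (P t1) (P t2).
Proof.
  intros HD H01 H02 H12 K0 K1 K2 P. unfold P.
  rewrite !line_inter_parabola_tangents, tri_area_parabola by auto. unfold tri_area.
  match goal with |- Rabs (cross ?u ?w) / 2 = _ =>
    replace (cross u w) with (cross e1 e2 * (t1 - t0) * (t2 - t0) * (t2 - t1) / 2)
      by (destruct c, e1, e2; unfold cross, psub; simpl; field) end.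
  rewrite Rabs_div, (Rabs_right 2) by lra. field.
Qed.

(** Implicit equation of the parabola [c + t e1 + t^2 e2]. *)
Definition parabola_eqn (c e1 e2 p : pt) :=
  cross e1 e2 * cross e1 (psub p c) - cross (psub p c) e2 ^ 2.

Lemma parabola_eqn_on c e1 e2 p : on_parabola c e1 e2 p -> parabola_eqn c e1 e2 p = 0.
Proof. intros [t ->]. destruct c, e1, e2. unfold parabola_eqn, cross, psub; simpl. ring. Qed.

Lemma on_parabola_of_eqn c e1 e2 p : cross e1 e2 <> 0 -> parabola_eqn c e1 e2 p = 0 ->
  on_parabola c e1 e2 p.
Proof.
  intros HD HQ. set (D := cross e1 e2) in *.
  exists (cross (psub p c) e2 / D).
  assert (Hb : cross e1 (psub p c) = (cross (psub p c) e2 / D) ^ 2 * D).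
  { unfold parabola_eqn in HQ. fold D in HQ. apply (Rmult_eq_reg_l D); auto.
    replace (D * ((cross (psub p c) e2 / D) ^ 2 * D)) with (cross (psub p c) e2 ^ 2)
      by (field; auto). lra. }
  destruct c as [c1 c2], e1 as [p1 q1], e2 as [p2 q2], p as [a b].
  unfold D, cross, psub in *; simpl in *.
  set (t := ((a - c1) * q2 - (b - c2) * p2) / (p1 * q2 - q1 * p2)) in *.
  assert (E1 : (a - c1) * q2 - (b - c2) * p2 = t * (p1 * q2 - q1 * p2)) by (unfold t; field; auto).
  f_equal; apply (Rmult_eq_reg_l (p1 * q2 - q1 * p2)); auto.
  - replace ((p1 * q2 - q1 * p2) * a) with ((p1 * q2 - q1 * p2) * c1
       + p1 * ((a - c1) * q2 - (b - c2) * p2) + p2 * (p1 * (b - c2) - q1 * (a - c1))) by ring.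
    rewrite E1, Hb. ring.
  - replace ((p1 * q2 - q1 * p2) * b) with ((p1 * q2 - q1 * p2) * c2
       + q1 * ((a - c1) * q2 - (b - c2) * p2) + q2 * (p1 * (b - c2) - q1 * (a - c1))) by ring.
    rewrite E1, Hb. ring.
Qed.

Lemma parabola_eqn_parabola_pt cA e1A e2A cB e1B e2B t :
  let w0 := psub cA cB in let D := cross e1B e2B in
  let l0 := cross e1B w0 in let l1 := cross e1B e1A in let l2 := cross e1B e2A in
  let m0 := cross w0 e2B in let m1 := cross e1A e2B in let m2 := cross e2A e2B in
  parabola_eqn cB e1B e2B (parabola_pt cA e1A e2A t) =
   (D * l0 - m0 ^ 2) + (D * l1 - 2 * m0 * m1) * t + (D * l2 - m1 ^ 2 - 2 * m0 * m2) * t ^ 2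
   + (- 2 * m1 * m2) * t ^ 3 + (- m2 ^ 2) * t ^ 4.
Proof.
  destruct cA, e1A, e2A, cB, e1B, e2B. unfold parabola_eqn, parabola_pt, cross, psub; simpl. ring.
Qed.

Lemma eq0_of_mult_sub (q : R) t t1 : t <> t1 -> (t - t1) * q = 0 -> q = 0.
Proof. intros H E. destruct (Rmult_integral _ _ E); auto. exfalso; apply H; lra. Qed.

Lemma linear_eq0 a0 a1 t1 t2 : t1 <> t2 ->
  a0 + a1 * t1 = 0 -> a0 + a1 * t2 = 0 -> a0 = 0 /\ a1 = 0.
Proof.
  intros H E1 E2. assert (a1 = 0) by (apply (eq0_of_mult_sub _ t1 t2); auto; lra).
  split; nra.
Qed.

(** Each step divides out the root [t1] and recurses on the remaining roots. *)
Lemma quadratic_eq0 a0 a1 a2 t1 t2 t3 : t1 <> t2 -> t1 <> t3 -> t2 <> t3 ->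
  a0 + a1 * t1 + a2 * t1 ^ 2 = 0 -> a0 + a1 * t2 + a2 * t2 ^ 2 = 0 ->
  a0 + a1 * t3 + a2 * t3 ^ 2 = 0 ->
  a0 = 0 /\ a1 = 0 /\ a2 = 0.
Proof.
  intros H12 H13 H23 E1 E2 E3.
  assert (Q : forall t, t <> t1 -> a0 + a1 * t + a2 * t ^ 2 = 0 -> (a1 + a2 * t1) + a2 * t = 0).
  { intros t Ht Et. apply (eq0_of_mult_sub _ t t1); auto.
    replace ((t - t1) * (a1 + a2 * t1 + a2 * t))
      with ((a0 + a1 * t + a2 * t ^ 2) - (a0 + a1 * t1 + a2 * t1 ^ 2)) by ring. lra. }
  destruct (linear_eq0 _ _ _ _ H23 (Q t2 (not_eq_sym H12) E2) (Q t3 (not_eq_sym H13) E3))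
    as [P0 P1]. subst. repeat split; nra.
Qed.

Lemma cubic_eq0 a0 a1 a2 a3 t1 t2 t3 t4 :
  t1 <> t2 -> t1 <> t3 -> t1 <> t4 -> t2 <> t3 -> t2 <> t4 -> t3 <> t4 ->
  a0 + a1 * t1 + a2 * t1 ^ 2 + a3 * t1 ^ 3 = 0 -> a0 + a1 * t2 + a2 * t2 ^ 2 + a3 * t2 ^ 3 = 0 ->
  a0 + a1 * t3 + a2 * t3 ^ 2 + a3 * t3 ^ 3 = 0 -> a0 + a1 * t4 + a2 * t4 ^ 2 + a3 * t4 ^ 3 = 0 ->
  a0 = 0 /\ a1 = 0 /\ a2 = 0 /\ a3 = 0.
Proof.
  intros H12 H13 H14 H23 H24 H34 E1 E2 E3 E4.
  assert (Q : forall t, t <> t1 -> a0 + a1 * t + a2 * t ^ 2 + a3 * t ^ 3 = 0 ->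
     (a1 + a2 * t1 + a3 * t1 ^ 2) + (a2 + a3 * t1) * t + a3 * t ^ 2 = 0).
  { intros t Ht Et. apply (eq0_of_mult_sub _ t t1); auto.
    replace ((t - t1) * (a1 + a2 * t1 + a3 * t1 ^ 2 + (a2 + a3 * t1) * t + a3 * t ^ 2)) with
      ((a0 + a1 * t + a2 * t ^ 2 + a3 * t ^ 3) - (a0 + a1 * t1 + a2 * t1 ^ 2 + a3 * t1 ^ 3))
      by ring. lra. }
  destruct (quadratic_eq0 _ _ _ _ _ _ H23 H24 H34 (Q _ (not_eq_sym H12) E2)
    (Q _ (not_eq_sym H13) E3) (Q _ (not_eq_sym H14) E4)) as [P0 [P1 P2]].
  subst a3. assert (a2 = 0) by lra. subst a2. assert (a1 = 0) by lra. subst a1.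
  repeat split; lra.
Qed.

Lemma quartic_eq0 a0 a1 a2 a3 a4 t1 t2 t3 t4 t5 :
  t1 <> t2 -> t1 <> t3 -> t1 <> t4 -> t1 <> t5 -> t2 <> t3 -> t2 <> t4 -> t2 <> t5 ->
  t3 <> t4 -> t3 <> t5 -> t4 <> t5 ->
  (forall t, t = t1 \/ t = t2 \/ t = t3 \/ t = t4 \/ t = t5 ->
     a0 + a1 * t + a2 * t ^ 2 + a3 * t ^ 3 + a4 * t ^ 4 = 0) ->
  forall t, a0 + a1 * t + a2 * t ^ 2 + a3 * t ^ 3 + a4 * t ^ 4 = 0.
Proof.
  intros H12 H13 H14 H15 H23 H24 H25 H34 H35 H45 E.
  assert (E1 : a0 + a1 * t1 + a2 * t1 ^ 2 + a3 * t1 ^ 3 + a4 * t1 ^ 4 = 0) by (apply E; auto).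
  assert (Q : forall t, t <> t1 -> a0 + a1 * t + a2 * t ^ 2 + a3 * t ^ 3 + a4 * t ^ 4 = 0 ->
     (a1 + a2 * t1 + a3 * t1 ^ 2 + a4 * t1 ^ 3) + (a2 + a3 * t1 + a4 * t1 ^ 2) * t
     + (a3 + a4 * t1) * t ^ 2 + a4 * t ^ 3 = 0).
  { intros t Ht Et. apply (eq0_of_mult_sub _ t t1); auto.
    replace ((t - t1) * (a1 + a2 * t1 + a3 * t1 ^ 2 + a4 * t1 ^ 3
      + (a2 + a3 * t1 + a4 * t1 ^ 2) * t + (a3 + a4 * t1) * t ^ 2 + a4 * t ^ 3)) with
      ((a0 + a1 * t + a2 * t ^ 2 + a3 * t ^ 3 + a4 * t ^ 4) -
       (a0 + a1 * t1 + a2 * t1 ^ 2 + a3 * t1 ^ 3 + a4 * t1 ^ 4)) by ring. lra. }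
  destruct (cubic_eq0 _ _ _ _ _ _ _ _ H23 H24 H25 H34 H35 H45
    (Q _ (not_eq_sym H12) (E t2 ltac:(auto))) (Q _ (not_eq_sym H13) (E t3 ltac:(auto)))
    (Q _ (not_eq_sym H14) (E t4 ltac:(auto))) (Q _ (not_eq_sym H15) (E t5 ltac:(auto))))
    as [P0 [P1 [P2 P3]]].
  subst a4. assert (a3 = 0) by lra. subst a3. assert (a2 = 0) by lra. subst a2.
  assert (a1 = 0) by lra. subst a1. intros t. lra.
Qed.

(** The points of parabola A satisfy the quartic equation of parabola B in the parameter of A. *)
Lemma on_parabola_of_five_common_points cA e1A e2A cB e1B e2B (P : nat -> pt) :
  cross e1B e2B <> 0 ->
  (forall i j, (i < 5)%nat -> (j < 5)%nat -> i <> j -> P i <> P j) ->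
  (forall i, (i < 5)%nat -> on_parabola cA e1A e2A (P i) /\ on_parabola cB e1B e2B (P i)) ->
  forall p, on_parabola cA e1A e2A p -> on_parabola cB e1B e2B p.
Proof.
  intros DB Hd Ho p Hp.
  destruct (Ho 0%nat ltac:(lia)) as [[t1 E1] B1].
  destruct (Ho 1%nat ltac:(lia)) as [[t2 E2] B2].
  destruct (Ho 2%nat ltac:(lia)) as [[t3 E3] B3].
  destruct (Ho 3%nat ltac:(lia)) as [[t4 E4] B4].
  destruct (Ho 4%nat ltac:(lia)) as [[t5 E5] B5].
  assert (Dt : forall i j ti tj, (i < 5)%nat -> (j < 5)%nat -> i <> j ->
     P i = parabola_pt cA e1A e2A ti -> P j = parabola_pt cA e1A e2A tj -> ti <> tj).
  { intros i j ti tj Hi Hj Hij Ei Ej E. apply (Hd i j Hi Hj Hij). rewrite Ei, Ej, E. reflexivity. }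
  apply on_parabola_of_eqn; auto. destruct Hp as [t ->].
  change (parabola_eqn cB e1B e2B (parabola_pt cA e1A e2A t) = 0).
  rewrite parabola_eqn_parabola_pt. apply quartic_eq0 with t1 t2 t3 t4 t5;
    try (eapply Dt; [| | |eassumption|eassumption]; lia).
  intros t' Ht'. rewrite <- parabola_eqn_parabola_pt.
  destruct Ht' as [H|[H|[H|[H|H]]]]; subst t'; apply parabola_eqn_on; unfold parabola_pt;
    [rewrite <- E1 | rewrite <- E2 | rewrite <- E3 | rewrite <- E4 | rewrite <- E5]; auto.
Qed.

(** * The curve in the frame at [X(s)] *)

Lemma kappa_D2 x y t : kappa x y t = Derive x t * D2 y t - Derive y t * D2 x t.
Proof. reflexivity. Qed.

Lemma unit_speed_orthogonal (x y : R -> R) s r0 : 0 < r0 ->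
  (forall t, Rabs (t - s) < r0 -> ex_derive x t /\ ex_derive (Derive x) t) ->
  (forall t, Rabs (t - s) < r0 -> ex_derive y t /\ ex_derive (Derive y) t) ->
  (forall t, Rabs (t - s) < r0 -> Derive x t ^ 2 + Derive y t ^ 2 = 1) ->
  Derive x s * D2 x s + Derive y s * D2 y s = 0.
Proof.
  intros Hr Hx Hy Ha.
  assert (Hs : Rabs (s - s) < r0) by (rewrite Rminus_eq_0, Rabs_R0; auto).
  assert (E : locally s (fun t => (fun _ : R => 1) t
                                  = (fun t : R => Derive x t ^ 2 + Derive y t ^ 2) t)).
  { exists (mkposreal r0 Hr). intros t Ht. symmetry. apply Ha, Ht. }
  pose proof (Derive_ext_loc _ _ _ E) as E2. rewrite Derive_const in E2.
  destruct (Hx s Hs) as [_ Hx2]. destruct (Hy s Hs) as [_ Hy2].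
  assert (D : Derive (fun t : R => Derive x t ^ 2 + Derive y t ^ 2) s
             = 2 * (Derive x s * D2 x s + Derive y s * D2 y s)).
  { apply is_derive_unique. auto_derive; [repeat split; auto|]. fold_eta. unfold D2. ring. }
  rewrite D in E2. lra.
Qed.

(** Coordinates of [X(s+h) - X(s)] and of its first two derivatives in the frame
    [(X'(s), J X'(s))], [J] the rotation by a right angle. *)
Definition ucoord (x y : R -> R) s h := Derive x s * (x (s+h) - x s) + Derive y s * (y (s+h) - y s).
Definition vcoord (x y : R -> R) s h := Derive x s * (y (s+h) - y s) - Derive y s * (x (s+h) - x s).
Definition ucoord' (x y : R -> R) s h := Derive x s * Derive x (s+h) + Derive y s * Derive y (s+h).
Definition vcoord' (x y : R -> R) s h := Derive x s * Derive y (s+h) - Derive y s * Derive x (s+h).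
Definition ucoord'' (x y : R -> R) s h := Derive x s * D2 x (s+h) + Derive y s * D2 y (s+h).
Definition vcoord'' (x y : R -> R) s h := Derive x s * D2 y (s+h) - Derive y s * D2 x (s+h).

Definition wronskian (x y : R -> R) s h :=
  ucoord x y s h * vcoord' x y s h - vcoord x y s h * ucoord' x y s h.

(** The limit of [U / T] when [h2 -> h1 = h]. *)
Definition UT_ratio_limit (x y : R -> R) s h :=
  vcoord x y s h ^ 2 * Rabs (kappa x y (s + h))
    / (vcoord' x y s h ^ 2 * Rabs (wronskian x y s h)).

(** Two first integrals of the equation [UT_ratio_limit = 1/2]. *)
Definition first_integral1 (x y : R -> R) s h :=
  vcoord' x y s h ^ 2 * vcoord x y s h / (4 * wronskian x y s h ^ 2).
Definition integral2_num (x y : R -> R) s h :=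
  ucoord x y s h * vcoord' x y s h - 2 * vcoord x y s h * ucoord' x y s h.
Definition first_integral2 (x y : R -> R) s h :=
  vcoord' x y s h * integral2_num x y s h / (4 * wronskian x y s h ^ 2).

Definition third_u (x y : R -> R) s := Derive x s * D3 x s + Derive y s * D3 y s.
Definition third_v (x y : R -> R) s := Derive x s * D3 y s - Derive y s * D3 x s.

Section Asymptotics.
Variables (x y : R -> R) (s r0 : R).
Hypothesis Hr0 : 0 < r0.
Hypothesis Hdx : forall t, Rabs (t - s) < r0 ->
  ex_derive x t /\ ex_derive (Derive x) t /\ ex_derive (D2 x) t.
Hypothesis Hdy : forall t, Rabs (t - s) < r0 ->
  ex_derive y t /\ ex_derive (Derive y) t /\ ex_derive (D2 y) t.
Hypothesis Hal : forall t, Rabs (t - s) < r0 -> Derive x t ^ 2 + Derive y t ^ 2 = 1.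
Hypothesis Hk : kappa x y s <> 0.

Let k0 := kappa x y s.

Lemma unit_speed_at_s : Derive x s ^ 2 + Derive y s ^ 2 = 1.
Proof. apply Hal. rewrite Rminus_eq_0, Rabs_R0; auto. Qed.

Lemma orthogonal_at_s : Derive x s * D2 x s + Derive y s * D2 y s = 0.
Proof.
  apply (unit_speed_orthogonal x y s r0); auto;
    intros t Ht; [destruct (Hdx t Ht) | destruct (Hdy t Ht)]; tauto.
Qed.

Definition v_rem h := (vcoord x y s h - k0 * h ^ 2 / 2) / h ^ 3.
Definition v'_rem h := (vcoord' x y s h - k0 * h) / h ^ 2.
Definition u_rem h := (ucoord x y s h - h) / h ^ 3.
Definition u'_rem h := (ucoord' x y s h - 1) / h ^ 2.

Lemma taylor_x : littleo_pow (fun h => x (s + h) - x s - h * Derive x s - h ^ 2 / 2 * D2 x s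
                                       - h ^ 3 / 6 * D3 x s) 3 /\
  littleo_pow (fun h => Derive x (s + h) - Derive x s - h * D2 x s - h ^ 2 / 2 * D3 x s) 2.
Proof. apply taylor3 with r0; auto. Qed.

Lemma taylor_y : littleo_pow (fun h => y (s + h) - y s - h * Derive y s - h ^ 2 / 2 * D2 y s
                                       - h ^ 3 / 6 * D3 y s) 3 /\
  littleo_pow (fun h => Derive y (s + h) - Derive y s - h * D2 y s - h ^ 2 / 2 * D3 y s) 2.
Proof. apply taylor3 with r0; auto. Qed.

Lemma lim0_v_rem : lim0 v_rem (third_v x y s / 6).
Proof.
  destruct taylor_x as [X3 _]. destruct taylor_y as [Y3 _].
  eapply lim0_ext; [|apply (lim0_littleo_comb _ _ 3 (Derive x s) (- Derive y s) _ Y3 X3)].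
  intros h Hh. unfold v_rem, vcoord, third_v, k0. rewrite kappa_D2. field. auto.
Qed.

Lemma lim0_v'_rem : lim0 v'_rem (third_v x y s / 2).
Proof.
  destruct taylor_x as [_ X2]. destruct taylor_y as [_ Y2].
  eapply lim0_ext; [|apply (lim0_littleo_comb _ _ 2 (Derive x s) (- Derive y s) _ Y2 X2)].
  intros h Hh. unfold v'_rem, vcoord', third_v, k0. rewrite kappa_D2. field. auto.
Qed.

Lemma lim0_u_rem : lim0 u_rem (third_u x y s / 6).
Proof.
  destruct taylor_x as [X3 _]. destruct taylor_y as [Y3 _].
  eapply lim0_ext; [|apply (lim0_littleo_comb _ _ 3 (Derive x s) (Derive y s) _ X3 Y3)].
  intros h Hh. unfold u_rem.
  replace (ucoord x y s h - h) with (ucoord x y s h - h * (Derive x s ^ 2 + Derive y s ^ 2)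
      - h ^ 2 / 2 * (Derive x s * D2 x s + Derive y s * D2 y s))
    by (rewrite unit_speed_at_s, orthogonal_at_s; ring).
  unfold ucoord, third_u. field. auto.
Qed.

Lemma lim0_u'_rem : lim0 u'_rem (third_u x y s / 2).
Proof.
  destruct taylor_x as [_ X2]. destruct taylor_y as [_ Y2].
  eapply lim0_ext; [|apply (lim0_littleo_comb _ _ 2 (Derive x s) (Derive y s) _ X2 Y2)].
  intros h Hh. unfold u'_rem.
  replace (ucoord' x y s h - 1) with (ucoord' x y s h - (Derive x s ^ 2 + Derive y s ^ 2)
      - h * (Derive x s * D2 x s + Derive y s * D2 y s))
    by (rewrite unit_speed_at_s, orthogonal_at_s; ring).
  unfold ucoord', third_u. field. auto.
Qed.

Lemma lim0_kappa_shift : lim0 (fun h => kappa x y (s + h)) k0.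
Proof.
  assert (Hs : Rabs (s - s) < r0) by (rewrite Rminus_eq_0, Rabs_R0; auto).
  destruct (Hdx s Hs) as [_ [Hx1 Hx2]]. destruct (Hdy s Hs) as [_ [Hy1 Hy2]].
  unfold k0. rewrite kappa_D2. eapply lim0_ext; [intros h _; symmetry; apply kappa_D2|].
  apply lim0_minus; apply lim0_mult; apply lim0_shift; auto.
Qed.

Definition W_norm h := (1 + h ^ 2 * u_rem h) * (k0 + h * v'_rem h)
  - (k0 / 2 + h * v_rem h) * (1 + h ^ 2 * u'_rem h).
Definition N_norm h := (v'_rem h - 2 * v_rem h) + h * k0 * u_rem h + h ^ 2 * v'_rem h * u_rem h
  - h * k0 * u'_rem h - 2 * h ^ 2 * v_rem h * u'_rem h.

Lemma vcoord_expand h : h <> 0 -> vcoord x y s h = h ^ 2 * (k0 / 2 + h * v_rem h).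
Proof. intros. unfold v_rem. field. auto. Qed.
Lemma vcoord'_expand h : h <> 0 -> vcoord' x y s h = h * (k0 + h * v'_rem h).
Proof. intros. unfold v'_rem. field. auto. Qed.
Lemma ucoord_expand h : h <> 0 -> ucoord x y s h = h * (1 + h ^ 2 * u_rem h).
Proof. intros. unfold u_rem. field. auto. Qed.
Lemma ucoord'_expand h : h <> 0 -> ucoord' x y s h = 1 + h ^ 2 * u'_rem h.
Proof. intros. unfold u'_rem. field. auto. Qed.

Lemma wronskian_expand h : h <> 0 -> wronskian x y s h = h ^ 2 * W_norm h.
Proof.
  intros. unfold wronskian, W_norm.
  rewrite vcoord_expand, vcoord'_expand, ucoord_expand, ucoord'_expand; auto. ring.
Qed.

Lemma integral2_num_expand h : h <> 0 -> integral2_num x y s h = h ^ 3 * N_norm h.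
Proof.
  intros. unfold integral2_num, N_norm.
  rewrite vcoord_expand, vcoord'_expand, ucoord_expand, ucoord'_expand; auto. field.
Qed.

Ltac lim0_auto := repeat (first [ apply lim0_const | apply lim0_id | apply lim0_v_rem
  | apply lim0_v'_rem | apply lim0_u_rem | apply lim0_u'_rem | apply lim0_kappa_shift
  | apply lim0_minus | apply lim0_plus | apply lim0_mult | apply lim0_pow
  | apply lim0_abs ]).

Lemma lim0_W_norm : lim0 W_norm (k0 / 2).
Proof. unfold W_norm. eapply lim0_eq; [lim0_auto|field]. Qed.
Lemma lim0_N_norm : lim0 N_norm (third_v x y s / 6).
Proof. unfold N_norm. eapply lim0_eq; [lim0_auto|field]. Qed.
Lemma lim0_v_factor : lim0 (fun h => k0 / 2 + h * v_rem h) (k0 / 2).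
Proof. eapply lim0_eq; [lim0_auto|field]. Qed.
Lemma lim0_v'_factor : lim0 (fun h => k0 + h * v'_rem h) k0.
Proof. eapply lim0_eq; [lim0_auto|field]. Qed.
Lemma lim0_u'_factor : lim0 (fun h => 1 + h ^ 2 * u'_rem h) 1.
Proof. eapply lim0_eq; [lim0_auto|field]. Qed.

Lemma nonvanishing_near0 : exists e, 0 < e /\ forall h, h <> 0 -> Rabs h < e ->
  k0 / 2 + h * v_rem h <> 0 /\ k0 + h * v'_rem h <> 0 /\ 0 < W_norm h * kappa x y (s + h) /\
  0 < 1 + h ^ 2 * u'_rem h /\ kappa x y (s + h) <> 0.
Proof.
  assert (k0 <> 0) by exact Hk.
  destruct (lim0_sign _ _ lim0_v_factor) as [d1 [D1 H1]]; [lra|].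
  destruct (lim0_sign _ _ lim0_v'_factor) as [d2 [D2 H2]]; [lra|].
  destruct (lim0_pos _ _ (lim0_mult _ _ _ _ lim0_W_norm lim0_kappa_shift)) as [d3 [D3 H3]]; [nra|].
  destruct (lim0_pos _ _ lim0_u'_factor) as [d4 [D4 H4]]; [lra|].
  destruct (lim0_sign _ _ lim0_kappa_shift) as [d5 [D5 H5]]; [exact Hk|].
  exists (Rmin d1 (Rmin d2 (Rmin d3 (Rmin d4 d5)))).
  split; [repeat apply Rmin_pos; auto|].
  intros h Hh Hb.
  pose proof (Rmin_l d1 (Rmin d2 (Rmin d3 (Rmin d4 d5)))).
  pose proof (Rmin_r d1 (Rmin d2 (Rmin d3 (Rmin d4 d5)))).
  pose proof (Rmin_l d2 (Rmin d3 (Rmin d4 d5))). pose proof (Rmin_r d2 (Rmin d3 (Rmin d4 d5))).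
  pose proof (Rmin_l d3 (Rmin d4 d5)). pose proof (Rmin_r d3 (Rmin d4 d5)).
  pose proof (Rmin_l d4 d5). pose proof (Rmin_r d4 d5).
  specialize (H1 h Hh ltac:(lra)). specialize (H2 h Hh ltac:(lra)).
  specialize (H3 h Hh ltac:(lra)). specialize (H4 h Hh ltac:(lra)). specialize (H5 h Hh ltac:(lra)).
  split; [|split; [|split; [|split]]]; try lra; intro E; rewrite E in *; nra.
Qed.

Lemma lim0_first_integral1 : lim0 (first_integral1 x y s) (k0 / 2).
Proof.
  destruct nonvanishing_near0 as [e [He Hn]].
  apply (lim0_ext_loc (fun h => (k0 + h * v'_rem h) ^ 2 * (k0 / 2 + h * v_rem h)
                                 / (4 * W_norm h ^ 2)) _ _ e He).
  - intros h Hh Hb. destruct (Hn h Hh Hb) as [_ [_ [HW _]]]. unfold first_integral1.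
    rewrite vcoord_expand, vcoord'_expand, wronskian_expand; auto.
    field. split; auto. intro E; rewrite E in HW; lra.
  - eapply lim0_eq.
    + apply lim0_div; [apply lim0_mult; [apply lim0_pow, lim0_v'_factor|apply lim0_v_factor]
                      |apply lim0_mult; [apply lim0_const|apply lim0_pow, lim0_W_norm]|].
      apply Rmult_integral_contrapositive. split; [lra|]. apply pow_nonzero. unfold k0; lra.
    + field. exact Hk.
Qed.

Lemma lim0_first_integral2 : lim0 (first_integral2 x y s) (third_v x y s / (6 * k0)).
Proof.
  destruct nonvanishing_near0 as [e [He Hn]].
  apply (lim0_ext_loc (fun h => (k0 + h * v'_rem h) * N_norm h / (4 * W_norm h ^ 2)) _ _ e He).
  - intros h Hh Hb. destruct (Hn h Hh Hb) as [_ [_ [HW _]]]. unfold first_integral2.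
    rewrite integral2_num_expand, vcoord'_expand, wronskian_expand; auto.
    field. split; auto. intro E; rewrite E in HW; lra.
  - eapply lim0_eq.
    + apply lim0_div; [apply lim0_mult; [apply lim0_v'_factor|apply lim0_N_norm]
                      |apply lim0_mult; [apply lim0_const|apply lim0_pow, lim0_W_norm]|].
      apply Rmult_integral_contrapositive. split; [lra|]. apply pow_nonzero. unfold k0; lra.
    + field. exact Hk.
Qed.

Lemma lim0_UT_ratio_limit : lim0 (UT_ratio_limit x y s) (1 / 2).
Proof.
  destruct nonvanishing_near0 as [e [He Hn]].
  apply (lim0_ext_loc (fun h => (k0 / 2 + h * v_rem h) ^ 2 * Rabs (kappa x y (s + h)) /
     ((k0 + h * v'_rem h) ^ 2 * Rabs (W_norm h))) _ _ e He).
  - intros h Hh Hb. destruct (Hn h Hh Hb) as [_ [Hv' [HW _]]]. unfold UT_ratio_limit.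
    rewrite vcoord_expand, vcoord'_expand, wronskian_expand; auto.
    rewrite Rabs_mult, (Rabs_right (h ^ 2)) by (apply Rle_ge, pow2_ge_0).
    field. split; [apply Rabs_no_R0; intro E; rewrite E in HW; lra|split; auto].
  - assert (Rabs k0 <> 0) by (apply Rabs_no_R0; exact Hk).
    eapply lim0_eq.
    + apply lim0_div; [apply lim0_mult; [apply lim0_pow, lim0_v_factor|apply lim0_abs, lim0_kappa_shift]
                      |apply lim0_mult; [apply lim0_pow, lim0_v'_factor|apply lim0_abs, lim0_W_norm]|].
      rewrite Rabs_half. apply Rmult_integral_contrapositive.
      split; [apply pow_nonzero; exact Hk|lra].
    + rewrite Rabs_half. field. auto.
Qed.

End Asymptotics.

(** * Local parabolas *)

(** By [kappa_in_frame] this is [2 v^2 kappa(s+h) - v'^2 W]; where [W kappa(s+h) > 0] it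
    vanishes exactly when [UT_ratio_limit = 1/2]. *)
Definition ode_residual (x y : R -> R) s h :=
  2 * vcoord x y s h ^ 2 * (ucoord' x y s h * vcoord'' x y s h - vcoord' x y s h * ucoord'' x y s h)
  - vcoord' x y s h ^ 2 * wronskian x y s h.

Section FrameDerivatives.
Variables (x y : R -> R) (s r0 : R).
Hypothesis Hdx : forall t, Rabs (t - s) < r0 -> ex_derive x t /\ ex_derive (Derive x) t.
Hypothesis Hdy : forall t, Rabs (t - s) < r0 -> ex_derive y t /\ ex_derive (Derive y) t.

Let derivable_at h : Rabs h < r0 ->
  (ex_derive x (s + h) /\ ex_derive (Derive x) (s + h)) /\
  (ex_derive y (s + h) /\ ex_derive (Derive y) (s + h)).
Proof.
  intros Hh. replace (s + h) with (s + h - s + s) by ring.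
  split; [apply Hdx | apply Hdy]; replace (s + h - s + s - s) with h by ring; auto.
Qed.

Lemma is_derive_ucoord h : Rabs h < r0 -> is_derive (ucoord x y s) h (ucoord' x y s h).
Proof.
  intros Hh. destruct (derivable_at h Hh) as [[H1 _] [H2 _]].
  unfold ucoord, ucoord'. auto_derive; [repeat split; auto|]. fold_eta. ring.
Qed.
Lemma is_derive_vcoord h : Rabs h < r0 -> is_derive (vcoord x y s) h (vcoord' x y s h).
Proof.
  intros Hh. destruct (derivable_at h Hh) as [[H1 _] [H2 _]].
  unfold vcoord, vcoord'. auto_derive; [repeat split; auto|]. fold_eta. ring.
Qed.
Lemma is_derive_ucoord' h : Rabs h < r0 -> is_derive (ucoord' x y s) h (ucoord'' x y s h).
Proof.
  intros Hh. destruct (derivable_at h Hh) as [[_ H1] [_ H2]].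
  unfold ucoord', ucoord'', D2. auto_derive; [repeat split; auto|]. fold_eta. ring.
Qed.
Lemma is_derive_vcoord' h : Rabs h < r0 -> is_derive (vcoord' x y s) h (vcoord'' x y s h).
Proof.
  intros Hh. destruct (derivable_at h Hh) as [[_ H1] [_ H2]].
  unfold vcoord', vcoord'', D2. auto_derive; [repeat split; auto|]. fold_eta. ring.
Qed.

Ltac derive_frame h Hh :=
  pose proof (is_derive_ucoord h Hh) as Du; pose proof (is_derive_vcoord h Hh) as Dv;
  pose proof (is_derive_ucoord' h Hh) as Du'; pose proof (is_derive_vcoord' h Hh) as Dv';
  auto_derive; [repeat split; try (eexists; eassumption)
               | fold_eta; rewrite (is_derive_unique _ _ _ Du), (is_derive_unique _ _ _ Dv),
                   (is_derive_unique _ _ _ Du'), (is_derive_unique _ _ _ Dv')].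

Lemma is_derive_first_integral1 h : Rabs h < r0 -> wronskian x y s h <> 0 ->
  is_derive (first_integral1 x y s) h
   (- vcoord' x y s h * ode_residual x y s h / (4 * wronskian x y s h ^ 3)).
Proof.
  intros Hh HW. unfold first_integral1, ode_residual, wronskian in *.
  derive_frame h Hh; [intro E; apply HW; nra | field; auto].
Qed.

Lemma is_derive_first_integral2 h : Rabs h < r0 -> wronskian x y s h <> 0 ->
  vcoord x y s h <> 0 -> ucoord' x y s h <> 0 ->
  is_derive (first_integral2 x y s) h
   ((integral2_num x y s h * wronskian x y s h
     + ucoord x y s h * vcoord' x y s h * wronskian x y s h
     - 2 * ucoord x y s h * vcoord' x y s h * integral2_num x y s h)
    * ode_residual x y s h
    / (2 * vcoord x y s h ^ 2 * ucoord' x y s h * (4 * wronskian x y s h ^ 3))).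
Proof.
  intros Hh HW Hv Hu. unfold first_integral2, integral2_num, ode_residual, wronskian in *.
  derive_frame h Hh; [intro E; apply HW; nra | field; auto].
Qed.

End FrameDerivatives.

Lemma mult_eq_of_Rabs_eq a b k W : 0 < W * k -> a * Rabs k = b * Rabs W -> a * k = b * W.
Proof.
  intros Hs E. destruct (Rlt_or_le 0 k) as [Hk|Hk].
  - assert (0 < W) by nra. rewrite !Rabs_right in E by lra. exact E.
  - assert (k <> 0) by (intro; subst; lra).
    assert (k < 0) by lra. assert (W < 0) by nra.
    rewrite !Rabs_left in E by lra. lra.
Qed.

Lemma eq_lim0_of_derive0 (f : R -> R) l e : 0 < e ->
  (forall z, z <> 0 -> Rabs z < e -> is_derive f z 0) -> lim0 f l ->
  forall h, h <> 0 -> Rabs h < e -> f h = l.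
Proof.
  intros He Hd Hl h Hh Hb.
  destruct (Rlt_or_le 0 h) as [Hpos|Hneg].
  - assert (C : forall z, 0 < z < e -> f z = f (e / 2)).
    { intros z Hz. apply (constant_of_derive0 f 0 e); try lra.
      intros w Hw. apply Hd; [lra|rewrite Rabs_right; lra]. }
    rewrite C by (rewrite Rabs_right in Hb; lra).
    exact (lim0_const_right f _ l e He C Hl).
  - assert (C : forall z, - e < z < 0 -> f z = f (- (e / 2))).
    { intros z Hz. apply (constant_of_derive0 f (- e) 0); try lra.
      intros w Hw. apply Hd; [lra|rewrite Rabs_left; lra]. }
    rewrite C by (rewrite Rabs_left in Hb; lra).
    exact (lim0_const_left f _ l e He C Hl).
Qed.

Lemma first_integrals_identity x y s h : wronskian x y s h <> 0 ->
  first_integral1 x y s h * vcoord x y s h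
  = (first_integral1 x y s h * ucoord x y s h + first_integral2 x y s h * vcoord x y s h) ^ 2.
Proof.
  intros HW. unfold first_integral1, first_integral2, integral2_num. unfold wronskian in *.
  field. exact HW.
Qed.

(** [e2] of the parabola [P + t T + t^2 (k1 J T - k2 T)], [J] the rotation by a right angle. *)
Definition frame_parabola_e2 (T : pt) (k1 k2 : R) : pt :=
  (k1 * - snd T - k2 * fst T, k1 * fst T - k2 * snd T).

Definition dot (p q : pt) : R := fst p * fst q + snd p * snd q.

Lemma on_frame_parabola (P T Q : pt) k1 k2 : dot T T = 1 -> k1 <> 0 ->
  k1 * cross T (psub Q P) = (k1 * dot T (psub Q P) + k2 * cross T (psub Q P)) ^ 2 ->
  on_parabola P T (frame_parabola_e2 T k1 k2) Q.
Proof.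
  destruct P as [p1 p2], T as [c d], Q as [q1 q2].
  unfold dot, cross, psub, frame_parabola_e2; simpl. intros HT Hk Id.
  set (U := c * (q1 - p1) + d * (q2 - p2)) in *.
  set (V := c * (q2 - p2) - d * (q1 - p1)) in *.
  set (t := (k1 * U + k2 * V) / k1).
  assert (Vt : V = k1 * t ^ 2)
    by (apply (Rmult_eq_reg_l k1); auto; rewrite Id; unfold t; field; auto).
  assert (Ut : U = t - k2 * t ^ 2).
  { apply (Rmult_eq_reg_l k1); auto.
    replace (k1 * (t - k2 * t ^ 2)) with (k1 * t - k2 * (k1 * t ^ 2)) by ring.
    rewrite <- Vt. unfold t. field. auto. }
  exists t. simpl. f_equal.
  - transitivity (p1 + (c * c + d * d) * (q1 - p1)); [rewrite HT; ring|].
    replace ((c * c + d * d) * (q1 - p1)) with (U * c - V * d) by (unfold U, V; ring).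
    rewrite Ut, Vt. ring.
  - transitivity (p2 + (c * c + d * d) * (q2 - p2)); [rewrite HT; ring|].
    replace ((c * c + d * d) * (q2 - p2)) with (U * d + V * c) by (unfold U, V; ring).
    rewrite Ut, Vt. ring.
Qed.

Definition local_parabola_e2 (x y : R -> R) s :=
  frame_parabola_e2 (Tan x y s) (kappa x y s / 2) (third_v x y s / (6 * kappa x y s)).

Definition ratio_limit_half_near (x y : R -> R) s : Prop :=
  exists e, 0 < e /\ forall h, h <> 0 -> Rabs h < e -> UT_ratio_limit x y s h = 1 / 2.

Section LocalParabola.
Variables (x y : R -> R) (s r0 : R).
Hypothesis Hr0 : 0 < r0.
Hypothesis Hdx : forall t, Rabs (t - s) < r0 ->
  ex_derive x t /\ ex_derive (Derive x) t /\ ex_derive (D2 x) t.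
Hypothesis Hdy : forall t, Rabs (t - s) < r0 ->
  ex_derive y t /\ ex_derive (Derive y) t /\ ex_derive (D2 y) t.
Hypothesis Hal : forall t, Rabs (t - s) < r0 -> Derive x t ^ 2 + Derive y t ^ 2 = 1.
Hypothesis Hk : kappa x y s <> 0.
Hypothesis Hode : ratio_limit_half_near x y s.

Let Hdx' t (Ht : Rabs (t - s) < r0) : ex_derive x t /\ ex_derive (Derive x) t.
Proof. destruct (Hdx t Ht); tauto. Qed.
Let Hdy' t (Ht : Rabs (t - s) < r0) : ex_derive y t /\ ex_derive (Derive y) t.
Proof. destruct (Hdy t Ht); tauto. Qed.

Lemma kappa_in_frame h : kappa x y (s + h) =
  ucoord' x y s h * vcoord'' x y s h - vcoord' x y s h * ucoord'' x y s h.
Proof.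
  rewrite kappa_D2. unfold ucoord', vcoord', ucoord'', vcoord''.
  rewrite <- (Rmult_1_l (_ - _)), <- (unit_speed_at_s x y s r0 Hr0 Hal). ring.
Qed.

Lemma ode_near0 : exists e, 0 < e /\ forall h, h <> 0 -> Rabs h < e ->
  ode_residual x y s h = 0 /\ wronskian x y s h <> 0 /\ vcoord x y s h <> 0 /\
  ucoord' x y s h <> 0 /\ Rabs h < r0.
Proof.
  destruct (nonvanishing_near0 x y s r0 Hr0 Hdx Hdy Hal Hk) as [e1 [E1 N1]].
  destruct Hode as [e2 [E2 O2]].
  exists (Rmin e1 (Rmin e2 r0)). split; [repeat apply Rmin_pos; auto|].
  intros h Hh Hb.
  pose proof (Rmin_l e1 (Rmin e2 r0)). pose proof (Rmin_r e1 (Rmin e2 r0)).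
  pose proof (Rmin_l e2 r0). pose proof (Rmin_r e2 r0).
  destruct (N1 h Hh ltac:(lra)) as [n1 [n2 [n3 [n4 n5]]]].
  specialize (O2 h Hh ltac:(lra)). pose proof (pow2_pos_of_neq0 h Hh).
  assert (W0 : 0 < wronskian x y s h * kappa x y (s + h))
    by (rewrite wronskian_expand; auto; nra).
  assert (v0 : vcoord x y s h <> 0)
    by (rewrite vcoord_expand; auto; apply Rmult_integral_contrapositive; split; lra).
  assert (v'0 : vcoord' x y s h <> 0)
    by (rewrite vcoord'_expand; auto; apply Rmult_integral_contrapositive; split; lra).
  assert (u'0 : ucoord' x y s h <> 0)
    by (rewrite ucoord'_expand; auto; lra).
  assert (Wn : wronskian x y s h <> 0) by (intro E; rewrite E in W0; lra).
  split; [|repeat split; auto; lra].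
  unfold UT_ratio_limit in O2. unfold ode_residual. rewrite <- kappa_in_frame.
  assert (HD : 0 < vcoord' x y s h ^ 2 * Rabs (wronskian x y s h))
    by (apply Rmult_lt_0_compat; [apply pow2_pos_of_neq0|apply Rabs_pos_lt]; auto).
  set (D := vcoord' x y s h ^ 2 * Rabs (wronskian x y s h)) in *.
  assert (E : 2 * vcoord x y s h ^ 2 * Rabs (kappa x y (s + h)) = D).
  { replace (2 * vcoord x y s h ^ 2 * Rabs (kappa x y (s + h)))
      with (2 * (vcoord x y s h ^ 2 * Rabs (kappa x y (s + h)) / D) * D) by (field; lra).
    rewrite O2. field. }
  unfold D in E.
  apply mult_eq_of_Rabs_eq in E; [lra|nra].
Qed.

Lemma first_integrals_constant : exists e, 0 < e /\ forall h, h <> 0 -> Rabs h < e ->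
  first_integral1 x y s h = kappa x y s / 2 /\
  first_integral2 x y s h = third_v x y s / (6 * kappa x y s) /\ wronskian x y s h <> 0.
Proof.
  destruct ode_near0 as [e [He H]]. exists e. split; auto.
  assert (D1 : forall z, z <> 0 -> Rabs z < e -> is_derive (first_integral1 x y s) z 0).
  { intros z Hz Hb. destruct (H z Hz Hb) as [E0 [W0 [_ [_ Hr]]]].
    pose proof (is_derive_first_integral1 x y s r0 Hdx' Hdy' z Hr W0) as D.
    rewrite E0 in D. replace (- vcoord' x y s z * 0 / (4 * wronskian x y s z ^ 3)) with 0 in D
      by (field; auto). exact D. }
  assert (D2 : forall z, z <> 0 -> Rabs z < e -> is_derive (first_integral2 x y s) z 0).
  { intros z Hz Hb. destruct (H z Hz Hb) as [E0 [W0 [V0 [U0 Hr]]]].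
    pose proof (is_derive_first_integral2 x y s r0 Hdx' Hdy' z Hr W0 V0 U0) as D.
    rewrite E0 in D. match type of D with is_derive _ _ ?v => replace v with 0 in D end.
    - exact D.
    - field. repeat split; auto. }
  intros h Hh Hb. destruct (H h Hh Hb) as [_ [W0 _]]. split; [|split; auto].
  - exact (eq_lim0_of_derive0 _ _ e He D1 (lim0_first_integral1 x y s r0 Hr0 Hdx Hdy Hal Hk) h Hh Hb).
  - exact (eq_lim0_of_derive0 _ _ e He D2 (lim0_first_integral2 x y s r0 Hr0 Hdx Hdy Hal Hk) h Hh Hb).
Qed.

Lemma near_on_local_parabola : exists e, 0 < e /\ forall h, Rabs h < e ->
  on_parabola (Xp x y s) (Tan x y s) (local_parabola_e2 x y s) (Xp x y (s + h)).
Proof.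
  destruct first_integrals_constant as [e [He H]]. exists e. split; auto. intros h Hb.
  destruct (Req_dec h 0) as [->|Hh].
  - exists 0. unfold Xp. rewrite Rplus_0_r. simpl. f_equal; ring.
  - destruct (H h Hh Hb) as [K1 [K2 W0]].
    apply on_frame_parabola; [|lra|].
    { unfold dot, Tan; simpl. rewrite <- (unit_speed_at_s x y s r0 Hr0 Hal). ring. }
    change (kappa x y s / 2 * vcoord x y s h = (kappa x y s / 2 * ucoord x y s h
             + third_v x y s / (6 * kappa x y s) * vcoord x y s h) ^ 2).
    rewrite <- K1, <- K2. apply first_integrals_identity, W0.
Qed.

End LocalParabola.

(** * The limit of [U / T] *)

Section TangentTriangle.
Variables (x y : R -> R) (s h1 : R).
Hypothesis Hx1 : ex_derive x (s + h1).
Hypothesis Hx2 : ex_derive (Derive x) (s + h1).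
Hypothesis Hy1 : ex_derive y (s + h1).
Hypothesis Hy2 : ex_derive (Derive y) (s + h1).
Hypothesis Hunit : Derive x s ^ 2 + Derive y s ^ 2 = 1.

(** The triangle with vertices [X(s)], [X(s+h1)], [X(s+h1+d)], studied as [d -> 0]. *)
Definition tangent_det_fun d := tangent_triangle_det (Xp x y s) (Tan x y s)
  (Xp x y (s + h1)) (Tan x y (s + h1)) (Xp x y (s + (h1 + d))) (Tan x y (s + (h1 + d))).
Definition tangent_cross12 d := cross (Tan x y (s + h1)) (Tan x y (s + (h1 + d))).
Definition tangent_cross20 d := cross (Tan x y (s + (h1 + d))) (Tan x y s).
Definition chord_cross d :=
  cross (psub (Xp x y (s + h1)) (Xp x y s)) (psub (Xp x y (s + (h1 + d))) (Xp x y s)).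

Let shift0 (f : R -> R) : ex_derive f (s + h1) -> ex_derive f (s + (h1 + 0)).
Proof. rewrite Rplus_0_r. auto. Qed.

Lemma lim0_tangent_det_quot :
  lim0 (fun d => tangent_det_fun d / d) (- vcoord x y s h1 * kappa x y (s + h1)).
Proof.
  apply lim0_difference_quotient.
  - unfold tangent_det_fun, tangent_triangle_det, cross, Xp, Tan; simpl.
    auto_derive; [repeat split; apply shift0; auto|].
    fold_eta. rewrite !Rplus_0_r, kappa_D2. unfold vcoord, D2. ring.
  - unfold tangent_det_fun. rewrite Rplus_0_r. apply tangent_triangle_det_twice.
Qed.

Lemma lim0_tangent_cross12_quot : lim0 (fun d => tangent_cross12 d / d) (kappa x y (s + h1)).
Proof.
  apply lim0_difference_quotient.
  - unfold tangent_cross12, cross, Tan; simpl.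
    auto_derive; [repeat split; apply shift0; auto|].
    fold_eta. rewrite !Rplus_0_r, kappa_D2. unfold D2. ring.
  - unfold tangent_cross12, cross. rewrite Rplus_0_r. ring.
Qed.

Lemma lim0_chord_cross_quot : lim0 (fun d => chord_cross d / d) (wronskian x y s h1).
Proof.
  apply lim0_difference_quotient.
  - unfold chord_cross, cross, psub, Xp; simpl.
    auto_derive; [repeat split; apply shift0; auto|].
    fold_eta. rewrite !Rplus_0_r. unfold wronskian, ucoord, vcoord, ucoord', vcoord'.
    rewrite <- (Rmult_1_l (_ - _)), <- Hunit. ring.
  - unfold chord_cross, cross. rewrite Rplus_0_r. ring.
Qed.

Lemma lim0_tangent_cross20 : lim0 tangent_cross20 (- vcoord' x y s h1).
Proof.
  unfold tangent_cross20, cross, Tan; simpl.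
  eapply lim0_ext; [intros d _; rewrite <- (Rplus_assoc s h1 d); reflexivity|].
  eapply lim0_eq; [apply lim0_minus; apply lim0_mult; try apply lim0_const; apply lim0_shift; auto|].
  unfold vcoord'. ring.
Qed.

Lemma Uarea_tangent_det d :
  tangent_cross12 d <> 0 -> tangent_cross20 d <> 0 -> vcoord' x y s h1 <> 0 ->
  Uarea x y s h1 (h1 + d) = tangent_det_fun d ^ 2
    / (2 * Rabs (vcoord' x y s h1 * tangent_cross12 d * tangent_cross20 d)).
Proof. intros. apply tri_area_line_inters; auto. Qed.

Lemma tangent_crosses_neq0_near0 : vcoord' x y s h1 <> 0 -> kappa x y (s + h1) <> 0 ->
  wronskian x y s h1 <> 0 -> exists e, 0 < e /\ forall d, d <> 0 -> Rabs d < e ->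
  tangent_cross12 d <> 0 /\ tangent_cross20 d <> 0 /\ chord_cross d <> 0.
Proof.
  intros Hv' Hk HW.
  destruct (lim0_sign _ _ lim0_tangent_cross12_quot Hk) as [e1 [E1 N1]].
  destruct (lim0_sign _ _ lim0_tangent_cross20) as [e2 [E2 N2]]; [lra|].
  destruct (lim0_sign _ _ lim0_chord_cross_quot HW) as [e3 [E3 N3]].
  exists (Rmin e1 (Rmin e2 e3)). split; [repeat apply Rmin_pos; auto|].
  intros d Hd Hb.
  pose proof (Rmin_l e1 (Rmin e2 e3)). pose proof (Rmin_r e1 (Rmin e2 e3)).
  pose proof (Rmin_l e2 e3). pose proof (Rmin_r e2 e3).
  specialize (N1 d Hd ltac:(lra)). specialize (N2 d Hd ltac:(lra)).
  specialize (N3 d Hd ltac:(lra)).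
  split; [|split]; intro E; rewrite E in *; unfold Rdiv in *; rewrite Rmult_0_l in *; lra.
Qed.

Lemma lim0_Tarea_quot :
  lim0 (fun d => Tarea x y s h1 (h1 + d) / Rabs d) (Rabs (wronskian x y s h1) / 2).
Proof.
  apply (lim0_ext (fun d => Rabs (chord_cross d / d) / 2)).
  - intros d Hd. change (Tarea x y s h1 (h1 + d)) with (Rabs (chord_cross d) / 2).
    unfold Rdiv. rewrite Rabs_mult, Rabs_inv. field. apply Rabs_no_R0; auto.
  - apply lim0_div; [apply lim0_abs, lim0_chord_cross_quot|apply lim0_const|lra].
Qed.

Lemma lim0_UT_ratio : vcoord x y s h1 <> 0 -> vcoord' x y s h1 <> 0 ->
  kappa x y (s + h1) <> 0 -> wronskian x y s h1 <> 0 ->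
  lim0 (fun d => Uarea x y s h1 (h1 + d) / Tarea x y s h1 (h1 + d)) (UT_ratio_limit x y s h1).
Proof.
  intros Hv Hv' Hk HW.
  destruct (tangent_crosses_neq0_near0 Hv' Hk HW) as [e [He NZ]].
  apply (lim0_ext_loc (fun d => (tangent_det_fun d / d) ^ 2 /
        (Rabs (vcoord' x y s h1) * Rabs (tangent_cross12 d / d) * Rabs (tangent_cross20 d)
         * Rabs (chord_cross d / d))) _ _ e He).
  - intros d Hd Hb. destruct (NZ d Hd Hb) as [Z1 [Z2 Z3]].
    change (Tarea x y s h1 (h1 + d)) with (Rabs (chord_cross d) / 2).
    rewrite Uarea_tangent_det by auto.
    replace ((tangent_det_fun d / d) ^ 2) with (tangent_det_fun d ^ 2 / Rabs d ^ 2)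
      by (rewrite pow2_abs; field; auto).
    unfold Rdiv. rewrite !Rabs_mult, !Rabs_inv.
    pose proof (Rabs_no_R0 d Hd). pose proof (Rabs_no_R0 _ Z1). pose proof (Rabs_no_R0 _ Z2).
    pose proof (Rabs_no_R0 _ Z3). pose proof (Rabs_no_R0 _ Hv').
    field. repeat split; auto.
  - eapply lim0_eq.
    + apply lim0_div; [apply lim0_pow, lim0_tangent_det_quot|
        repeat apply lim0_mult; try apply lim0_const; apply lim0_abs;
        auto using lim0_tangent_cross12_quot, lim0_tangent_cross20, lim0_chord_cross_quot|].
      repeat (match goal with |- _ * _ <> 0 => apply Rmult_integral_contrapositive; split end);
        apply Rabs_no_R0; auto. apply Ropp_neq_0_compat; auto.
    + unfold UT_ratio_limit. rewrite Rabs_Ropp, <- (pow2_abs (vcoord' x y s h1)).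
      replace ((- vcoord x y s h1 * kappa x y (s + h1)) ^ 2) with
        (vcoord x y s h1 ^ 2 * Rabs (kappa x y (s + h1)) ^ 2) by (rewrite pow2_abs; ring).
      pose proof (Rabs_no_R0 _ Hk). pose proof (Rabs_no_R0 _ HW). pose proof (Rabs_no_R0 _ Hv').
      field. repeat split; auto.
Qed.

Lemma Tarea_pos_near0 : vcoord' x y s h1 <> 0 -> kappa x y (s + h1) <> 0 ->
  wronskian x y s h1 <> 0 ->
  exists e, 0 < e /\ forall d, d <> 0 -> Rabs d < e -> 0 < Tarea x y s h1 (h1 + d).
Proof.
  intros Hv' Hk HW. destruct (tangent_crosses_neq0_near0 Hv' Hk HW) as [e [He NZ]].
  exists e. split; auto. intros d Hd Hb. destruct (NZ d Hd Hb) as [_ [_ H3]].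
  change (0 < Rabs (chord_cross d) / 2). pose proof (Rabs_pos_lt _ H3). lra.
Qed.

End TangentTriangle.

Lemma Rpower_div a b m : 0 < a -> 0 < b -> Rpower (a / b) m = Rpower a m / Rpower b m.
Proof.
  intros Ha Hb. assert (0 < a / b) by (apply Rdiv_lt_0_compat; auto).
  rewrite <- (Rmult_1_r (Rpower (a / b) m)), <- (Rinv_r (Rpower b m))
    by (apply Rgt_not_eq, exp_pos).
  rewrite <- Rmult_assoc, Rpower_mult_distr by auto.
  replace (a / b * b) with a by (field; lra). reflexivity.
Qed.

(** If [f = lam T^mu / T] with [f -> L > 0] and [T d ~ W |d|], comparing [d] with [d/2]
    gives [f(d) / f(d/2) -> 2^(mu-1)], which must equal 1. *)
Lemma power_law_linear (f T : R -> R) lam mu L W : 0 < L -> 0 < W -> lim0 f L ->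
  lim0 (fun d => T d / Rabs d) W ->
  (exists e, 0 < e /\ forall d, d <> 0 -> Rabs d < e ->
     0 < T d /\ f d = lam * Rpower (T d) mu / T d) ->
  mu = 1 /\ lam = L.
Proof.
  intros HL HW Lf LT [e [He Hf]].
  set (m := mu - 1).
  assert (Hf' : forall d, d <> 0 -> Rabs d < e -> 0 < T d /\ f d = lam * Rpower (T d) m).
  { intros d Hd Hb. destruct (Hf d Hd Hb) as [T0 E]. split; auto. rewrite E.
    replace mu with (m + 1) by (unfold m; ring). rewrite Rpower_plus, Rpower_1 by auto.
    field. lra. }
  assert (Hlam : lam <> 0).
  { intro E0. assert (Z : lim0 f 0).
    { apply (lim0_ext_loc (fun _ => 0) _ _ e He); [|apply lim0_const].
      intros d Hd Hb. destruct (Hf' d Hd Hb) as [_ E]. rewrite E, E0; ring. }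
    pose proof (lim0_unique _ _ _ Lf Z). lra. }
  assert (Lq : lim0 (fun d => f d / f (d / 2)) 1).
  { eapply lim0_eq; [apply lim0_div; [exact Lf|apply lim0_half, Lf|lra]|field; lra]. }
  assert (Lg : lim0 (fun d => 2 * (T d / Rabs d) / (T (d / 2) / Rabs (d / 2))) 2).
  { eapply lim0_eq; [apply lim0_div; [apply lim0_mult; [apply lim0_const|exact LT]
                       |apply (lim0_half (fun d => T d / Rabs d)), LT|lra]|field; lra]. }
  assert (Lq2 : lim0 (fun d => f d / f (d / 2)) (Rpower 2 m)).
  { apply (lim0_ext_loc _ _ _ e He) with (2 := lim0_Rpower _ m _ Lg ltac:(lra)).
    intros d Hd Hb.
    assert (Hd2 : d / 2 <> 0) by lra.
    assert (Hb2 : Rabs (d / 2) < e) by (rewrite Rabs_half; lra).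
    destruct (Hf' d Hd Hb) as [T1 E1]. destruct (Hf' _ Hd2 Hb2) as [T2 E2].
    rewrite E1, E2, Rabs_half.
    assert (Rabs d <> 0) by (apply Rabs_no_R0; auto).
    replace (2 * (T d / Rabs d) / (T (d / 2) / (Rabs d / 2))) with (T d / T (d / 2))
      by (field; split; lra).
    rewrite Rpower_div by auto.
    field. split; [apply Rgt_not_eq, exp_pos|auto]. }
  assert (Hm : m = 0).
  { pose proof (lim0_unique _ _ _ Lq Lq2) as E2. unfold Rpower in E2.
    apply (f_equal ln) in E2. rewrite ln_exp, ln_1 in E2. pose proof ln_lt_2. nra. }
  split; [unfold m in Hm; lra|].
  apply (lim0_unique f); [|exact Lf].
  apply (lim0_ext_loc (fun _ => lam) _ _ e He); [|apply lim0_const].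
  intros d Hd Hb. destruct (Hf' d Hd Hb) as [T0 E]. rewrite E, Hm, Rpower_O by auto. ring.
Qed.

Lemma regular_near a b x y s : in_I a b s -> strictly_convex a b x y -> arclength_param a b x y ->
  exists r0, 0 < r0 /\ (forall t, Rabs (t - s) < r0 -> in_I a b t) /\
  (forall t, Rabs (t - s) < r0 ->
     ex_derive x t /\ ex_derive (Derive x) t /\ ex_derive (D2 x) t) /\
  (forall t, Rabs (t - s) < r0 ->
     ex_derive y t /\ ex_derive (Derive y) t /\ ex_derive (D2 y) t) /\
  (forall t, Rabs (t - s) < r0 -> Derive x t ^ 2 + Derive y t ^ 2 = 1) /\
  kappa x y s <> 0.
Proof.
  intros Hs [Cx [Cy [_ [_ Kp]]]] Al.
  destruct (in_I_nbhd a b s Hs) as [r0 [Hr Hb]].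
  assert (C3 : forall f, C3_on a b f -> forall t, Rabs (t - s) < r0 ->
            ex_derive f t /\ ex_derive (Derive f) t /\ ex_derive (D2 f) t).
  { intros f Cf t Ht. destruct (Cf t (Hb t Ht)) as [D _].
    exact (conj (D 1%nat ltac:(lia)) (conj (D 2%nat ltac:(lia)) (D 3%nat ltac:(lia)))). }
  exists r0. split; [exact Hr|split; [exact Hb|split; [exact (C3 x Cx)|split; [exact (C3 y Cy)|split]]]].
  - intros t Ht. apply Al, Hb, Ht.
  - destruct (Kp s Hs) as [eps [_ [_ K]]]. intro E. rewrite E in K. lra.
Qed.

Lemma UT_ratio_asymptotics a b x y s :
  in_I a b s -> strictly_convex a b x y -> arclength_param a b x y ->
  exists e, 0 < e /\ (forall t, Rabs (t - s) < e -> in_I a b t) /\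
  forall h1, h1 <> 0 -> Rabs h1 < e ->
  exists e2, 0 < e2 /\ (forall d, d <> 0 -> Rabs d < e2 -> 0 < Tarea x y s h1 (h1 + d)) /\
  lim0 (fun d => Uarea x y s h1 (h1 + d) / Tarea x y s h1 (h1 + d)) (UT_ratio_limit x y s h1) /\
  lim0 (fun d => Tarea x y s h1 (h1 + d) / Rabs d) (Rabs (wronskian x y s h1) / 2) /\
  0 < UT_ratio_limit x y s h1 /\ 0 < Rabs (wronskian x y s h1) / 2.
Proof.
  intros Hs SC Al.
  destruct (regular_near a b x y s Hs SC Al) as [r0 [Hr [HI [Hdx [Hdy [Hal Hk]]]]]].
  destruct (nonvanishing_near0 x y s r0 Hr Hdx Hdy Hal Hk) as [e1 [E1 N1]].
  exists (Rmin e1 r0). pose proof (Rmin_l e1 r0). pose proof (Rmin_r e1 r0).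
  split; [apply Rmin_pos; auto|split; [intros t Ht; apply HI; lra|]].
  intros h1 Hh Hb.
  destruct (N1 h1 Hh ltac:(lra)) as [n1 [n2 [n3 [_ n5]]]]. pose proof (pow2_pos_of_neq0 h1 Hh).
  assert (v0 : vcoord x y s h1 <> 0)
    by (rewrite vcoord_expand; auto; apply Rmult_integral_contrapositive; split; lra).
  assert (v'0 : vcoord' x y s h1 <> 0)
    by (rewrite vcoord'_expand; auto; apply Rmult_integral_contrapositive; split; lra).
  assert (W0 : wronskian x y s h1 <> 0)
    by (rewrite wronskian_expand; auto; apply Rmult_integral_contrapositive;
        split; [lra|intro E; rewrite E in n3; lra]).
  assert (Hh1 : Rabs (s + h1 - s) < r0) by (replace (s + h1 - s) with h1 by ring; lra).
  destruct (Hdx _ Hh1) as [X1 [X2 _]]. destruct (Hdy _ Hh1) as [Y1 [Y2 _]].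
  pose proof (unit_speed_at_s x y s r0 Hr Hal) as Hunit.
  destruct (Tarea_pos_near0 x y s h1) as [e2 [E2 T0]]; auto.
  exists e2. split; [exact E2|split; [exact T0|split; [|split; [|split]]]].
  - apply lim0_UT_ratio; auto.
  - apply lim0_Tarea_quot; auto.
  - unfold UT_ratio_limit. apply Rdiv_lt_0_compat; apply Rmult_lt_0_compat;
      try apply pow2_pos_of_neq0; try apply Rabs_pos_lt; auto.
  - pose proof (Rabs_pos_lt _ W0). lra.
Qed.

Lemma admissible_pairs_near a b x y s e ds h1 : simple_curve a b x y -> in_I a b s ->
  (forall t, Rabs (t - s) < e -> in_I a b t) -> h1 <> 0 -> Rabs h1 < e -> Rabs h1 < ds ->
  exists rho, 0 < rho /\ forall d, d <> 0 -> Rabs d < rho ->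
    Rabs h1 < ds /\ Rabs (h1 + d) < ds /\ in_I a b (s + h1) /\ in_I a b (s + (h1 + d)) /\
    Xp x y s <> Xp x y (s + h1) /\ Xp x y s <> Xp x y (s + (h1 + d)) /\
    Xp x y (s + h1) <> Xp x y (s + (h1 + d)).
Proof.
  intros Sm Hs HI Hh H1 H2.
  assert (Ha : 0 < Rabs h1) by (apply Rabs_pos_lt; auto).
  exists (Rmin (ds - Rabs h1) (Rmin (Rabs h1) (e - Rabs h1))).
  split; [repeat apply Rmin_pos; lra|].
  intros d Hd Hb.
  pose proof (Rmin_l (ds - Rabs h1) (Rmin (Rabs h1) (e - Rabs h1))).
  pose proof (Rmin_r (ds - Rabs h1) (Rmin (Rabs h1) (e - Rabs h1))).
  pose proof (Rmin_l (Rabs h1) (e - Rabs h1)). pose proof (Rmin_r (Rabs h1) (e - Rabs h1)).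
  pose proof (Rabs_triang h1 d).
  assert (Hhd : h1 + d <> 0).
  { intro E. replace d with (- h1) in Hb by lra. rewrite Rabs_Ropp in Hb. lra. }
  assert (I1 : in_I a b (s + h1)) by (apply HI; replace (s + h1 - s) with h1 by ring; lra).
  assert (I2 : in_I a b (s + (h1 + d)))
    by (apply HI; replace (s + (h1 + d) - s) with (h1 + d) by ring; lra).
  assert (Inj : forall t t', in_I a b t -> in_I a b t' -> t <> t' -> Xp x y t <> Xp x y t')
    by (intros t t' Ht Ht' Hne E; apply Hne, (Sm t t' Ht Ht' E)).
  do 4 (split; [first [lra | assumption]|]).
  split; [|split]; apply Inj; auto; lra.
Qed.

Lemma ratio_limit_half_of_half_law a b x y s :
  in_I a b s -> strictly_convex a b x y -> arclength_param a b x y ->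
  for_small_h a b x y s (fun h1 h2 => Uarea x y s h1 h2 = / 2 * Tarea x y s h1 h2) ->
  ratio_limit_half_near x y s.
Proof.
  intros Hs SC Al [ds [Hds P]].
  destruct (UT_ratio_asymptotics a b x y s Hs SC Al) as [e [He [HI St]]].
  exists (Rmin e ds). split; [apply Rmin_pos; auto|].
  intros h1 Hh Hb. pose proof (Rmin_l e ds). pose proof (Rmin_r e ds).
  destruct (St h1 Hh ltac:(lra)) as [e2 [E2 [T0 [L1 _]]]].
  destruct SC as [_ [_ [Sm _]]].
  destruct (admissible_pairs_near a b x y s e ds h1 Sm Hs HI Hh ltac:(lra) ltac:(lra))
    as [rho [Hrho G]].
  apply (lim0_unique _ _ _ L1).
  apply (lim0_ext_loc (fun _ => 1 / 2) _ _ (Rmin e2 rho)); [apply Rmin_pos; auto| |apply lim0_const].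
  intros d Hd Hdb. pose proof (Rmin_l e2 rho). pose proof (Rmin_r e2 rho).
  destruct (G d Hd ltac:(lra)) as [g1 [g2 [g3 [g4 [g5 [g6 g7]]]]]].
  rewrite (P h1 (h1 + d) g1 g2 g3 g4 g5 g6 g7). specialize (T0 d Hd ltac:(lra)). field. lra.
Qed.

Lemma ratio_limit_half_of_power_law a b x y s lam mu :
  in_I a b s -> strictly_convex a b x y -> arclength_param a b x y ->
  for_small_h a b x y s (fun h1 h2 => Uarea x y s h1 h2 = lam * Rpower (Tarea x y s h1 h2) mu) ->
  ratio_limit_half_near x y s.
Proof.
  intros Hs SC Al [ds [Hds P]].
  destruct (UT_ratio_asymptotics a b x y s Hs SC Al) as [e [He [HI St]]].
  pose proof (Rmin_l e ds). pose proof (Rmin_r e ds).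
  assert (Hlam : forall h1, h1 <> 0 -> Rabs h1 < Rmin e ds -> UT_ratio_limit x y s h1 = lam).
  { intros h1 Hh Hb.
    destruct (St h1 Hh ltac:(lra)) as [e2 [E2 [T0 [L1 [L2 [R0 W0]]]]]].
    destruct SC as [_ [_ [Sm _]]].
    destruct (admissible_pairs_near a b x y s e ds h1 Sm Hs HI Hh ltac:(lra) ltac:(lra))
      as [rho [Hrho G]].
    symmetry. eapply proj2.
    apply (power_law_linear _ (fun d => Tarea x y s h1 (h1 + d)) lam mu _ _ R0 W0 L1 L2).
    exists (Rmin e2 rho). split; [apply Rmin_pos; auto|].
    intros d Hd Hdb. pose proof (Rmin_l e2 rho). pose proof (Rmin_r e2 rho).
    destruct (G d Hd ltac:(lra)) as [g1 [g2 [g3 [g4 [g5 [g6 g7]]]]]].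
    split; [apply T0; auto; lra|]. rewrite (P h1 (h1 + d) g1 g2 g3 g4 g5 g6 g7). reflexivity. }
  destruct (regular_near a b x y s Hs SC Al) as [r1 [Hr1 [_ [Hdx [Hdy [Hal Hk]]]]]].
  assert (Hl : lam = 1 / 2).
  { apply (lim0_const_right (UT_ratio_limit x y s) lam (1 / 2) (Rmin e ds));
      [apply Rmin_pos; auto| |exact (lim0_UT_ratio_limit x y s r1 Hr1 Hdx Hdy Hal Hk)].
    intros h Hh. apply Hlam; [lra|rewrite Rabs_right; lra]. }
  exists (Rmin e ds). split; [apply Rmin_pos; auto|]. intros h Hh Hb. rewrite Hlam; auto.
Qed.

(** * Gluing local parabolas *)

Definition on_local_parabola (x y : R -> R) s (p : pt) : Prop :=
  on_parabola (Xp x y s) (Tan x y s) (local_parabola_e2 x y s) p.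

Lemma cross_frame_parabola_e2 T k1 k2 : cross T (frame_parabola_e2 T k1 k2) = k1 * dot T T.
Proof. destruct T. unfold cross, frame_parabola_e2, dot; simpl. ring. Qed.

Section Gluing.
Variables (a b : Rbar) (x y : R -> R).
Hypothesis SC : strictly_convex a b x y.
Hypothesis AL : arclength_param a b x y.
Hypothesis Hode : forall s, in_I a b s -> ratio_limit_half_near x y s.

Lemma local_parabola_near s : in_I a b s -> exists e, 0 < e /\ forall h, Rabs h < e ->
  in_I a b (s + h) /\ on_local_parabola x y s (Xp x y (s + h)).
Proof.
  intros Hs. destruct (regular_near a b x y s Hs SC AL) as [r0 [Hr [HI [Hdx [Hdy [Hal Hk]]]]]].
  destruct (near_on_local_parabola x y s r0 Hr Hdx Hdy Hal Hk (Hode s Hs)) as [e [He Hp]].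
  exists (Rmin e r0). pose proof (Rmin_l e r0). pose proof (Rmin_r e r0).
  split; [apply Rmin_pos; auto|]. intros h Hh. split.
  - apply HI. replace (s + h - s) with h by ring. lra.
  - apply Hp. lra.
Qed.

Lemma local_parabola_nondegenerate s : in_I a b s -> cross (Tan x y s) (local_parabola_e2 x y s) <> 0.
Proof.
  intros Hs. destruct (regular_near a b x y s Hs SC AL) as [_ [_ [_ [_ [_ [_ Hk]]]]]].
  unfold local_parabola_e2. rewrite cross_frame_parabola_e2.
  replace (dot (Tan x y s) (Tan x y s)) with 1 by (unfold dot, Tan; simpl; rewrite <- (AL s Hs); ring).
  lra.
Qed.

(** Nearby local parabolas share the five points [X(s' + i eta)], [i < 5]. *)
Lemma local_parabolas_agree s : in_I a b s -> exists e, 0 < e /\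
  forall s', in_I a b s' -> Rabs (s' - s) < e ->
  forall p, on_local_parabola x y s p <-> on_local_parabola x y s' p.
Proof.
  intros Hs. destruct (local_parabola_near s Hs) as [e [He Hl]]. exists e. split; auto.
  intros s' Hs' Hb. destruct (local_parabola_near s' Hs') as [e' [He' Hl']].
  set (eta := Rmin e' (e - Rabs (s' - s)) / 5).
  pose proof (Rmin_l e' (e - Rabs (s' - s))). pose proof (Rmin_r e' (e - Rabs (s' - s))).
  assert (Heta : 0 < eta) by (unfold eta; apply Rdiv_lt_0_compat; [apply Rmin_pos|]; lra).
  set (P := fun i : nat => Xp x y (s' + INR i * eta)).
  assert (Hi : forall i, (i < 5)%nat -> 0 <= INR i * eta <= 4 * eta).
  { intros i Hi. split; [apply Rmult_le_pos; [apply pos_INR|lra]|].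
    apply Rmult_le_compat_r; [lra|]. replace 4 with (INR 4) by (simpl; ring). apply le_INR. lia. }
  assert (On : forall i, (i < 5)%nat ->
            on_local_parabola x y s (P i) /\ on_local_parabola x y s' (P i)).
  { intros i Hi5. specialize (Hi i Hi5). split; unfold P.
    - replace (s' + INR i * eta) with (s + (s' - s + INR i * eta)) by ring.
      apply Hl. pose proof (Rabs_triang (s' - s) (INR i * eta)).
      rewrite (Rabs_right (INR i * eta)) in H1 by lra. unfold eta in *. lra.
    - apply Hl'. rewrite Rabs_right by lra. unfold eta in *. lra. }
  assert (Dist : forall i j, (i < 5)%nat -> (j < 5)%nat -> i <> j -> P i <> P j).
  { intros i j Hi5 Hj5 Hij E. apply Hij, INR_eq.
    assert (InI : forall k, (k < 5)%nat -> in_I a b (s' + INR k * eta)).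
    { intros k Hk5. apply Hl'. specialize (Hi k Hk5). rewrite Rabs_right by lra.
      unfold eta in *. lra. }
    destruct SC as [_ [_ [Sm _]]].
    pose proof (Sm _ _ (InI i Hi5) (InI j Hj5) E). apply (Rmult_eq_reg_r eta); lra. }
  intros p. split; apply on_parabola_of_five_common_points with (P := P); auto;
    try apply local_parabola_nondegenerate; auto; intros i Hi5; destruct (On i Hi5); auto.
Qed.

Lemma on_local_parabola_everywhere s0 : in_I a b s0 ->
  forall s, in_I a b s -> on_local_parabola x y s0 (Xp x y s).
Proof.
  intros H0 s Hs.
  assert (Self : on_local_parabola x y s (Xp x y s)).
  { destruct (local_parabola_near s Hs) as [e [He Hl]].
    destruct (Hl 0) as [_ Hp]; [rewrite Rabs_R0; auto|]. rewrite Rplus_0_r in Hp. exact Hp. }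
  set (Q := fun t => forall p, on_local_parabola x y s0 p <-> on_local_parabola x y t p).
  assert (Transport : forall al be, in_I a b al -> in_I a b be -> al <= be -> (Q al <-> Q be)).
  { intros al be Ha Hb Hab. apply segment_transport_iff; auto.
    intros t Ht. assert (It : in_I a b t) by (apply (in_I_between a b al be); auto).
    destruct (local_parabolas_agree t It) as [e [He Hp]]. exists e. split; auto.
    intros t' Ht' Htt. assert (It' : in_I a b t') by (apply (in_I_between a b al be); auto).
    specialize (Hp t' It' Htt). unfold Q. split; intros HQ p; rewrite HQ; auto.
    rewrite Hp; tauto. }
  assert (Qs : Q s).
  { assert (Q0 : Q s0) by (intros p; tauto).
    destruct (Rle_dec s0 s); [apply (Transport s0 s)|apply (Transport s s0)]; auto; lra. }
  apply Qs, Self.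
Qed.

End Gluing.

Lemma open_part_of_parabola_of_ratio_half a b x y : Rbar_lt a b ->
  strictly_convex a b x y -> arclength_param a b x y ->
  (forall s, in_I a b s -> ratio_limit_half_near x y s) -> open_part_of_parabola a b x y.
Proof.
  intros Hab SC AL Hode. destruct (in_I_inhabited a b Hab) as [s0 Hs0].
  exists (Xp x y s0), (Tan x y s0), (local_parabola_e2 x y s0). split.
  - apply (local_parabola_nondegenerate a b x y SC AL s0 Hs0).
  - intros s Hs. apply (on_local_parabola_everywhere a b x y SC AL Hode s0 Hs0 s Hs).
Qed.

(** * Parabolas satisfy [U = T / 2] *)

Definition parabola_param (c e1 e2 p : pt) : R := cross (psub p c) e2 / cross e1 e2.

Section OnParabola.
Variables (a b : Rbar) (x y : R -> R) (c e1 e2 : pt).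
Hypothesis SC : strictly_convex a b x y.
Hypothesis AL : arclength_param a b x y.
Hypothesis HD : cross e1 e2 <> 0.
Hypothesis Hon : forall s, in_I a b s -> on_parabola c e1 e2 (Xp x y s).

Let tau s := parabola_param c e1 e2 (Xp x y s).
Let speed s := cross (Tan x y s) e2 / cross e1 e2.

Lemma Xp_parabola s : in_I a b s -> Xp x y s = parabola_pt c e1 e2 (tau s).
Proof.
  intros Hs. destruct (Hon s Hs) as [t Ht].
  assert (E : tau s = t).
  { unfold tau, parabola_param. rewrite Ht.
    destruct c, e1, e2. unfold cross, psub in *; simpl in *. field. auto. }
  rewrite E, Ht. reflexivity.
Qed.

Lemma Tan_parabola s : in_I a b s -> Tan x y s = parabola_tangent e1 e2 (speed s) (tau s).
Proof.
  intros Hs. destruct (in_I_nbhd a b s Hs) as [r [Hr Hb]].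
  destruct SC as [Cx [Cy _]].
  assert (Dx : ex_derive x s) by exact (proj1 (Cx s Hs) 1%nat ltac:(lia)).
  assert (Dy : ex_derive y s) by exact (proj1 (Cy s Hs) 1%nat ltac:(lia)).
  set (D := cross e1 e2) in *.
  set (T := fun r => ((x r - fst c) * snd e2 - (y r - snd c) * fst e2) / D).
  assert (Near : forall u, Rabs (u - s) < r ->
            x u = fst c + T u * fst e1 + T u ^ 2 * fst e2 /\
            y u = snd c + T u * snd e1 + T u ^ 2 * snd e2).
  { intros u Hu. pose proof (Xp_parabola u (Hb u Hu)) as E.
    unfold Xp, parabola_pt, tau, parabola_param in E. injection E as E1 E2. exact (conj E1 E2). }
  assert (Lx : locally s (fun r => x r = fst c + T r * fst e1 + T r ^ 2 * fst e2))
    by (exists (mkposreal r Hr); intros u Hu; apply (Near u Hu)).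
  assert (Ly : locally s (fun r => y r = snd c + T r * snd e1 + T r ^ 2 * snd e2))
    by (exists (mkposreal r Hr); intros u Hu; apply (Near u Hu)).
  assert (DT : is_derive T s (speed s)).
  { unfold T, speed, Tan, cross; simpl. auto_derive; [repeat split; auto|]. fold_eta. field. auto. }
  assert (Ex : Derive x s = speed s * (fst e1 + 2 * T s * fst e2)).
  { rewrite (Derive_ext_loc _ _ _ Lx). apply is_derive_unique.
    auto_derive; [repeat split; exists (speed s); exact DT|].
    fold_eta. rewrite (is_derive_unique _ _ _ DT). ring. }
  assert (Ey : Derive y s = speed s * (snd e1 + 2 * T s * snd e2)).
  { rewrite (Derive_ext_loc _ _ _ Ly). apply is_derive_unique.
    auto_derive; [repeat split; exists (speed s); exact DT|].
    fold_eta. rewrite (is_derive_unique _ _ _ DT). ring. }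
  unfold Tan at 1, parabola_tangent. rewrite Ex, Ey. reflexivity.
Qed.

Lemma speed_neq0 s : in_I a b s -> speed s <> 0.
Proof.
  intros Hs E. pose proof (Tan_parabola s Hs) as T. rewrite E in T. unfold Tan, parabola_tangent in T.
  injection T as E1 E2. pose proof (AL s Hs) as U. rewrite E1, E2 in U. lra.
Qed.

Lemma tau_inj s t : in_I a b s -> in_I a b t -> Xp x y s <> Xp x y t -> tau s <> tau t.
Proof. intros Hs Ht Hn E. apply Hn. rewrite (Xp_parabola s Hs), (Xp_parabola t Ht), E. reflexivity. Qed.

Lemma half_law_on_parabola s h1 h2 : in_I a b s -> in_I a b (s + h1) -> in_I a b (s + h2) ->
  Xp x y s <> Xp x y (s + h1) -> Xp x y s <> Xp x y (s + h2) ->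
  Xp x y (s + h1) <> Xp x y (s + h2) ->
  Uarea x y s h1 h2 = / 2 * Tarea x y s h1 h2 /\ 0 < Tarea x y s h1 h2.
Proof.
  intros H0 H1 H2 N01 N02 N12.
  pose proof (tau_inj _ _ H0 H1 N01). pose proof (tau_inj _ _ H0 H2 N02).
  pose proof (tau_inj _ _ H1 H2 N12).
  unfold Uarea, Tarea.
  rewrite (Tan_parabola s H0), (Tan_parabola (s + h1) H1), (Tan_parabola (s + h2) H2),
    (Xp_parabola s H0), (Xp_parabola (s + h1) H1), (Xp_parabola (s + h2) H2).
  split; [apply tri_area_parabola_tangents; auto using speed_neq0|].
  rewrite tri_area_parabola. apply Rmult_lt_0_compat; [|lra]. apply Rabs_pos_lt.
  repeat (match goal with |- _ * _ <> 0 => apply Rmult_integral_contrapositive; split end);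
    auto; intro E; [apply H | apply H3 | apply H4]; lra.
Qed.

End OnParabola.

Lemma for_small_h_impl a b x y s (P Q : R -> R -> Prop) :
  (forall h1 h2, P h1 h2 -> Q h1 h2) -> for_small_h a b x y s P -> for_small_h a b x y s Q.
Proof.
  intros PQ [d [Hd HP]]. exists d. split; [exact Hd|].
  intros h1 h2 B1 B2 I1 I2 N1 N2 N3. apply PQ, HP; auto.
Qed.

Theorem corollary8 (a b : Rbar) (x y : R -> R) :
  Rbar_lt a b ->
  strictly_convex a b x y ->
  arclength_param a b x y ->
  let P1 := exists lam mu : R -> R, forall s, in_I a b s ->
              for_small_h a b x y s (fun h1 h2 =>
                Uarea x y s h1 h2 = lam s * Rpower (Tarea x y s h1 h2) (mu s)) in
  let P2 := forall s, in_I a b s ->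
              for_small_h a b x y s (fun h1 h2 =>
                Uarea x y s h1 h2 = / 2 * Tarea x y s h1 h2) in
  let P3 := open_part_of_parabola a b x y in
  (P1 <-> P2) /\ (P2 <-> P3).
Proof.
  intros Hab SC AL P1 P2 P3.
  assert (P3P2 : P3 -> forall s, in_I a b s -> for_small_h a b x y s (fun h1 h2 =>
            Uarea x y s h1 h2 = / 2 * Tarea x y s h1 h2 /\ 0 < Tarea x y s h1 h2)).
  { intros [c [e1 [e2 [HD Hon]]]] s Hs. exists 1. split; [lra|].
    intros h1 h2 _ _ I1 I2 N1 N2 N3. apply (half_law_on_parabola a b x y c e1 e2); auto. }
  assert (P2P3 : P2 -> P3).
  { intros H. apply open_part_of_parabola_of_ratio_half; auto.
    intros s Hs. apply (ratio_limit_half_of_half_law a b x y s); auto. }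
  assert (P1P3 : P1 -> P3).
  { intros [lam [mu H]]. apply open_part_of_parabola_of_ratio_half; auto.
    intros s Hs. apply (ratio_limit_half_of_power_law a b x y s (lam s) (mu s)); auto. }
  split; split.
  - intros H s Hs. apply (for_small_h_impl a b x y s) with (2 := P3P2 (P1P3 H) s Hs).
    intros h1 h2 [E _]. exact E.
  - intros H. exists (fun _ => / 2), (fun _ => 1). intros s Hs.
    apply (for_small_h_impl a b x y s) with (2 := P3P2 (P2P3 H) s Hs).
    intros h1 h2 [E T0]. rewrite E, Rpower_1; auto.
  - exact P2P3.
  - intros H s Hs. apply (for_small_h_impl a b x y s) with (2 := P3P2 H s Hs).
    intros h1 h2 [E _]. exact E.
Qed.
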